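(* Let $\mathcal{GA}$ (with population size $\lambda$, selection operator $\mathrm{Sel}$, single-offspring crossover $\mathrm{Cross}$ and mutation $\mathrm{Mut}$) be given, and let $(A_1,\dots,A_{m+1})$ be a partition of $\mathcal X$ into levels, with $T:=\min\{t\lambda\mid P_t\cap A_{m+1}\neq\emptyset\}$. Suppose there exist parameters $s_1,\dots,s_m,s_*,p_0,\varepsilon\in(0,1]$, $\delta>0$ and a constant $\gamma_0\in(0,1)$ such that for all $\gamma\in(0,\gamma_0)$: (C1) $p_{mut}(y\in H_{j+1}\mid x\in H_j)\ge s_j\ge s_*$ for all $j\in[m]$; (C2') $p_{mut}(x\mid x)\ge p_0$ for all $x\in\mathcal X$; (C3') $p_{xor}(x\in H_{j+1}\mid u\in H_j, v\in H_{j+1})\ge\varepsilon$ for all $j\in[m-1]$; (C4') $\beta(\gamma,P)\ge\gamma\sqrt{\frac{1+\delta}{p_0\varepsilon\gamma_0}}$ for every $P\in(\mathcal X\setminus A_{m+1})^\lambda$; (C5) $\lambda\ge\frac{2}{a}\ln\!\left(\frac{32 m p_0}{(\delta\gamma_0)^2 c s_*\psi}\right)$, where $a:=\frac{\delta^2\gamma_0}{2(1+\delta)}$, $\psi:=\min\{\delta/2,1/2\}$ and $c:=\psi^4/24$. Then $$\mathbb E[T]\le\frac{2}{c\psi}\left(m\lambda\bigl(1+\ln(1+c\lambda)\bigr)+\frac{p_0}{(1+\delta)\gamma_0}\sum_{j=1}^m\frac{1}{s_j}\right).$$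
   Context: Let $\mathcal X=\{0,1\}^n$. The non-elitist genetic algorithm $\mathcal{GA}$ with population size $\lambda$ maintains populations $P_t=(x^{1,t},\dots,x^{\lambda,t})\in\mathcal X^\lambda$, $t=0,1,2,\dots$; $P_0$ is produced by some random initialization procedure, and for $t\ge1$, for each $j=1,\dots,\lambda$ (independently), two indices $i,i'\in[\lambda]$ are drawn independently by the selection operator $\mathrm{Sel}(P_{t-1})$ (a random index whose distribution depends on $P_{t-1}$), then $x:=\mathrm{Cross}(x^{i,t-1},x^{i',t-1})$ where $\mathrm{Cross}:\mathcal X\times\mathcal X\to\mathcal X$ is a randomized crossover operator, and $x^{j,t}:=\mathrm{Mut}(x)$ where $\mathrm{Mut}:\mathcal X\to\mathcal X$ is a randomized mutation operator. The algorithm never terminates. Notation: $p_{mut}(y\mid x):=\Pr(\mathrm{Mut}(x)=y)$; $p_{mut}(y\in B\mid x\in A)\ge s$ means $\Pr(\mathrm{Mut}(x)\in B)\ge s$ for every $x\in A$; $p_{xor}(x\in C\mid u\in A,v\in B)\ge\varepsilon$ means $\Pr(\mathrm{Cross}(u,v)\in C)\ge\varepsilon$ for all $u\in A$, $v\in B$. For a partition $(A_1,\dots,A_{m+1})$ of $\mathcal X$ (''levels''), $H_j:=\bigcup_{i=j}^{m+1}A_i$. Fix a total order $\succeq$ on $\mathcal X$ with $x\succ y$ whenever $x\in A_j$, $y\in A_{j-1}$; the elements of a population $P\in\mathcal X^\lambda$ are indexed so that $x^1\succeq x^2\succeq\dots\succeq x^\lambda$. For $\gamma\in(0,1)$ let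 $j(\gamma)$ be such that $x^{\lceil\gamma\lambda\rceil}\in A_{j(\gamma)}$, and let $\beta(\gamma,P)$ be the probability that $\mathrm{Sel}(P)$ returns an index $i$ with $x^i\in H_{j(\gamma)}$. *)

From Stdlib Require Import Reals.
From mathcomp Require Import all_boot.
Set Implicit Arguments. Unset Strict Implicit. Unset Printing Implicit Defensive.
Local Open Scope R_scope.

Definition bits (n : nat) := (n.-tuple bool).
Definition pop (n lam : nat) := {ffun 'I_lam -> bits n}.


Section GA.
Variables (n lam : nat).
(* randomized operators, given by their probability mass functions *)
Variable Sel : pop n lam -> 'I_lam -> R.             (* Pr(Sel(P) = i) *)
Variable Cross : bits n -> bits n -> bits n -> R.    (* Pr(Cross(u,v) = x) *)
Variable Mut : bits n -> bits n -> R.                (* p_mut(y | x) = Mut x y *)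
Variable init : pop n lam -> R.                      (* Pr(P_0 = P) *)
(* levels: lev x = j  <->  x \in A_j  (j in 1..m+1) *)
Variable lev : bits n -> nat.
Variable m : nat.

Definition is_distr (T : finType) (f : T -> R) : Prop :=
  (forall x, (0 <= f x)) /\ (\big[Rplus/0]_(x : T) f x = 1).

Definition offspring (P : pop n lam) (y : bits n) : R :=
  \big[Rplus/0]_(i : 'I_lam) \big[Rplus/0]_(i' : 'I_lam)
    (Sel P i * Sel P i' * \big[Rplus/0]_(x : bits n) (Cross (P i) (P i') x * Mut x y)).

(* transition kernel Pr(P_{t+1} = Q | P_t = P): lam independent offspring *)
Definition kernel (P Q : pop n lam) : R :=
  \big[Rmult/1]_(j : 'I_lam) offspring P (Q j).

Definition avoids (P : pop n lam) : bool := [forall i, (lev (P i) <= m)%N].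

(* q t Q = Pr(P_0, ..., P_t all avoid A_{m+1} and P_t = Q) *)
Fixpoint q (t : nat) (Q : pop n lam) : R :=
  match t with
  | O => if avoids Q then init Q else 0
  | t'.+1 => if avoids Q then \big[Rplus/0]_(P : pop n lam) (q t' P * kernel P Q)
             else 0
  end.

(* Pr(tau > t), where T = tau * lam, tau the first generation meeting A_{m+1} *)
Definition surv (t : nat) : R := \big[Rplus/0]_(Q : pop n lam) q t Q.

(* partial sums of E[T] = sum_{k>=0} Pr(T > k) = lam * sum_{t>=0} Pr(tau > t) *)
Definition ET_partial (N : nat) : R :=
  (INR lam * \big[Rplus/0]_(O <= t < N) surv t).

(* level of the k-th best individual x^k (1-based) of P, w.r.t. any total
   order compatible with the levels: the k-th largest level in P *)
Definition rank_level (P : pop n lam) (k : nat) : nat :=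
  nth O (sort geq [seq lev (P i) | i : 'I_lam]) k.-1.

(* beta(gamma, P) where k = ceil(gamma * lam) *)
Definition beta_k (k : nat) (P : pop n lam) : R :=
  \big[Rplus/0]_(i : 'I_lam | (rank_level P k <= lev (P i))%N) Sel P i.

End GA.

(* Drift analysis of a potential function, as in the level-based theorem.
   The current level [l] of a population is the highest level such that at
   least [k0 = ceil (gamma0 lam)] individuals lie in [H_l]; let [Y] be the number
   of individuals in [H_(l+1)].  By (C4'), both parents come from the top
   [gamma0] fraction with probability [(gamma0 sqrt ((1 + delta) / (p0 eps gamma0)))^2],
   so with (C1)-(C3') a single offspring lies in [H_(l+1)] with probability at
   least [(1 + delta) gamma0 s_l / p0], or [(1 + delta) Y / lam] if [Y > 0], and
   stays in [H_l] with probability at least [(1 + delta) gamma0].  Since the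
   [lam] offspring are independent, exponential moments of the new counts are
   explicit, and the potential
     [sum_(j > l) (2 / pi_j + C (R + 1)) + (2 / pi_l) exp (- psi Y)
        + C sum_(r <= R) exp (- psi rho^-r Y)]
   decreases by at least 1 in expectation per generation, except when the
   population falls below level [l]; a Chernoff bound makes this cost at most
   [exp (- a lam)] times the maximal potential, which (C5) makes at most 1.
   Summing the drift over generations bounds [E[T] / lam] by the maximal
   potential, which is at most the stated bound divided by [lam]. *)

From Stdlib Require Import Reals Lra.
From Coquelicot Require Import Coquelicot.
From mathcomp Require Import all_boot zify Rstruct.
Set Implicit Arguments. Unset Strict Implicit.
Local Open Scope R_scope.

Section BigR.
Variable I : Type.
Implicit Types (r : seq I) (P : pred I) (F G : I -> R).

Lemma sumR_ge0 r P F :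
  (forall i, P i -> 0 <= F i) -> 0 <= \big[Rplus/0]_(i <- r | P i) F i.
Proof. by move=> hF; apply: (big_ind (fun x => 0 <= x)) => //; [lra | move=> x y; lra]. Qed.

Lemma ler_sumR r P F G :
  (forall i, P i -> F i <= G i) ->
  \big[Rplus/0]_(i <- r | P i) F i <= \big[Rplus/0]_(i <- r | P i) G i.
Proof. by move=> hFG; apply: (big_ind2 (fun x y => x <= y)) => //; [lra | move=> *; lra]. Qed.

Lemma prodR_ge0 r P F :
  (forall i, P i -> 0 <= F i) -> 0 <= \big[Rmult/1]_(i <- r | P i) F i.
Proof. by move=> hF; apply: (big_ind (fun x => 0 <= x)) => //; [lra | move=> x y; nra]. Qed.

Lemma ler_sumR_pred r (A B : pred I) F :
  (forall i, A i -> B i) -> (forall i, B i -> 0 <= F i) ->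
  \big[Rplus/0]_(i <- r | A i) F i <= \big[Rplus/0]_(i <- r | B i) F i.
Proof.
move=> hAB hF; rewrite (big_mkcond A) (big_mkcond B); apply: ler_sumR => i _.
case hA: (A i); first by rewrite (hAB _ hA); lra.
by case hB: (B i); [exact: hF | lra].
Qed.

Lemma ler_sumR_predT r (A : pred I) F :
  (forall i, 0 <= F i) ->
  \big[Rplus/0]_(i <- r | A i) F i <= \big[Rplus/0]_(i <- r) F i.
Proof. by move=> hF; apply: ler_sumR_pred. Qed.

Lemma sumRB r P F G :
  \big[Rplus/0]_(i <- r | P i) (F i - G i) =
  \big[Rplus/0]_(i <- r | P i) F i - \big[Rplus/0]_(i <- r | P i) G i.
Proof.
rewrite (eq_bigr (fun i => F i + (-1) * G i)); last by move=> *; ring.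
by rewrite big_split /= -big_distrr /=; ring.
Qed.

End BigR.

Lemma sumR_const (I : finType) (P : pred I) (c : R) :
  \big[Rplus/0]_(i | P i) c = INR #|P| * c.
Proof.
rewrite big_const; elim: #|P| => [|k IH]; first by rewrite /=; lra.
by rewrite S_INR /= IH; lra.
Qed.

Lemma sumR_ord1 (k : nat) : \big[Rplus/0]_(i < k) 1 = INR k.
Proof. by rewrite sumR_const card_ord Rmult_1_r. Qed.

Lemma sumR_const_nat (a b : nat) (c : R) :
  \big[Rplus/0]_(a <= j < b) c = INR (b - a) * c.
Proof.
rewrite big_const_nat; elim: (b - a)%N => [|k IH]; first by rewrite /=; lra.
by rewrite S_INR /= IH; lra.
Qed.

Lemma prodR_const (I : finType) (P : pred I) (c : R) :
  \big[Rmult/1]_(i | P i) c = c ^ #|P|.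
Proof. by rewrite big_const; elim: #|P| => //= k ->. Qed.

Lemma prodR_if (I : finType) (B : pred I) (a : R) :
  \big[Rmult/1]_(i : I) (if B i then a else 1) = a ^ #|B|.
Proof. by rewrite -big_mkcond prodR_const. Qed.

Lemma sumR_ge_term (I : finType) (P : pred I) (F : I -> R) (i0 : I) :
  P i0 -> (forall i, P i -> 0 <= F i) -> F i0 <= \big[Rplus/0]_(i | P i) F i.
Proof.
move=> hi0 hF; rewrite (bigD1 i0) //=.
suff : 0 <= \big[Rplus/0]_(i | P i && (i != i0)) F i by lra.
by apply: sumR_ge0 => i /andP[hi _]; apply: hF.
Qed.

Lemma le_INR_leq (a b : nat) : (a <= b)%N -> INR a <= INR b.
Proof. by move=> h; apply: le_INR; apply/leP. Qed.

Lemma INR_ge1 (k : nat) : (0 < k)%N -> 1 <= INR k.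
Proof. by move=> h; apply: (le_INR_leq h). Qed.

Lemma lt_INR_ltn (a b : nat) : INR a < INR b -> (a < b)%N.
Proof. by move=> h; apply/ltP; apply: INR_lt. Qed.

Lemma exp_le_compat (x y : R) : x <= y -> exp x <= exp y.
Proof. by case/Rle_lt_or_eq_dec => [/exp_increasing|->]; lra. Qed.

Lemma exp_mul_INR (x : R) (k : nat) : exp (x * INR k) = exp x ^ k.
Proof.
elim: k => [|k IH]; first by rewrite /= Rmult_0_r exp_0.
by rewrite S_INR Rmult_plus_distr_l Rmult_1_r exp_plus IH /=; ring.
Qed.

Lemma pow_le_one (x : R) (k : nat) : 0 <= x <= 1 -> x ^ k <= 1.
Proof. by move=> h; rewrite -(pow1 k); apply: pow_incr. Qed.

Lemma pow_le_self (x : R) (k : nat) : 0 <= x <= 1 -> (1 <= k)%N -> x ^ k <= x.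
Proof. by move=> hx; case: k => [//|k] _ /=; have := pow_le_one k hx; nra. Qed.

Lemma ln_1p_le (x : R) : 0 <= x -> ln (1 + x) <= x.
Proof.
by move=> hx; rewrite -[X in _ <= X](ln_exp x); apply: ln_le; [lra | exact: exp_ineq1_le].
Qed.

Lemma ln_1p_ge0 (x : R) : 0 <= x -> 0 <= ln (1 + x).
Proof. by move=> hx; rewrite -ln_1; apply: ln_le; lra. Qed.

(* The second-order refinement of [ln (1 + d) <= d] that produces the constant
   [a = delta^2 gamma0 / (2 (1 + delta))] of (C5). *)
Lemma ln_1p_le_sub (d : R) : 0 <= d -> ln (1 + d) <= d - d ^ 2 / (2 * (1 + d)).
Proof.
move=> hd; set f := fun x => x - x ^ 2 / (2 * (1 + x)) - ln (1 + x).
have hf' x : 0 <= x -> x <= d -> derivable_pt_lim f x (x ^ 2 / (2 * (1 + x) ^ 2)).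
  by move=> hx _; apply is_derive_Reals; rewrite /f; auto_derive; [lra | field; lra].
have hf0 : f 0 = 0 by rewrite /f Rplus_0_r ln_1; field.
case: (Req_dec d 0) => [->|hd0]; first by rewrite /f in hf0; lra.
have [c [hc0 [hcd hfd]]] := MVT_cor3 f (fun x => x ^ 2 / (2 * (1 + x) ^ 2)) 0 d
  ltac:(lra) hf'.
suff : 0 <= c ^ 2 / (2 * (1 + c) ^ 2) * (d - 0) by rewrite /f in hf0 hfd; lra.
apply: Rmult_le_pos; last lra.
by apply: Rmult_le_pos; [nra | apply/Rlt_le/Rinv_0_lt_compat; nra].
Qed.

Lemma ln_le_half (z : R) : 0 < z -> ln z <= z / 2.
Proof.
move=> hz; rewrite -(ln_exp (z / 2)); apply: ln_le => //.
have h := exp_ineq1_le (z / 4).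
have -> : exp (z / 2) = exp (z / 4) * exp (z / 4) by rewrite -exp_plus; f_equal; lra.
have := Rle_0_sqr (1 - z / 4); have := exp_pos (z / 4); rewrite /Rsqr; nra.
Qed.

Lemma pow_1m_le_exp (x : R) (k : nat) : x <= 1 -> (1 - x) ^ k <= exp (- x * INR k).
Proof.
move=> hx; rewrite exp_mul_INR; apply: pow_incr; split; first lra.
by have := exp_ineq1_le (- x); lra.
Qed.

Lemma pow_1m_le_inv (x : R) (k : nat) : 0 <= x <= 1 -> (1 - x) ^ k <= / (1 + INR k * x).
Proof.
move=> [h0 h1]; have hk : 0 <= INR k * x by apply: Rmult_le_pos => //; apply: pos_INR.
have bern : 1 + INR k * x <= (1 + x) ^ k.
  case: (Req_dec x 0) => [->|hx]; last by apply: poly; lra.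
  by rewrite Rmult_0_r Rplus_0_r pow1; lra.
have hp : 0 <= (1 - x) ^ k by apply: pow_le; lra.
have hq : (1 - x) ^ k * (1 + x) ^ k <= 1 by rewrite -Rpow_mult_distr; apply: pow_le_one; nra.
apply: (Rmult_le_reg_r (1 + INR k * x)); first lra.
by rewrite Rinv_l; nra.
Qed.

Lemma exp_neg_le_inv (k : R) : 0 <= k -> exp (- k) <= / (1 + k).
Proof.
by move=> hk; have := exp_ineq1_le k; rewrite exp_Ropp; apply: Rinv_le_contravar; lra.
Qed.

Lemma div_1p_le_1m_exp (k : R) : 0 <= k -> k / (1 + k) <= 1 - exp (- k).
Proof.
move=> hk; have := exp_neg_le_inv hk.
have -> : k / (1 + k) = 1 - / (1 + k) by field; lra.
lra.
Qed.

Lemma ln_le_half_exp (A y : R) : 0 < A -> ln A <= y / 2 -> A * exp (- y / 2) <= 1.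
Proof.
move=> hA hy; rewrite -(exp_ln A) // -exp_plus -exp_0; apply: exp_le_compat; lra.
Qed.

Lemma mul_exp_neg_half_le (y : R) : 0 <= y -> y * exp (- y / 2) <= 2.
Proof.
move=> hy; have h := exp_ineq1_le (y / 2).
have e : exp (y / 2) * exp (- y / 2) = 1 by rewrite -exp_plus -exp_0; f_equal; field.
have := exp_pos (- y / 2); nra.
Qed.

Lemma pow_1m_mul_le (k : nat) (p p' u : R) : 0 <= u <= 1 -> 0 <= p' <= p -> p <= 1 ->
  (1 - u * p) ^ k <= (1 - u * p') ^ k.
Proof. by move=> hu hp hp1; apply: pow_incr; split; nra. Qed.

Lemma div_1p_bounds (x : R) : 0 <= x -> 0 <= x / (1 + x) <= 1.
Proof.
move=> hx; split; first by apply: Rdiv_le_0_compat; lra.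
by apply: (Rmult_le_reg_r (1 + x)); [| rewrite /Rdiv Rmult_assoc Rinv_l]; lra.
Qed.

(** * The offspring distribution and the transition kernel *)

Section Offspring.
Variables (n lam : nat).
Variable Sel : pop n lam -> 'I_lam -> R.
Variable Cross : bits n -> bits n -> bits n -> R.
Variable Mut : bits n -> bits n -> R.
Hypothesis HSel : forall P, is_distr (Sel P).
Hypothesis HCross : forall u v, is_distr (Cross u v).
Hypothesis HMut : forall x, is_distr (Mut x).

Local Notation off := (offspring Sel Cross Mut).
Local Notation ker := (kernel Sel Cross Mut).

Lemma Sel_ge0 P i : 0 <= Sel P i. Proof. by case: (HSel P). Qed.
Lemma Cross_ge0 u v x : 0 <= Cross u v x. Proof. by case: (HCross u v). Qed.
Lemma Mut_ge0 x y : 0 <= Mut x y. Proof. by case: (HMut x). Qed.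

Lemma offspring_ge0 P y : 0 <= off P y.
Proof.
apply: sumR_ge0 => i _; apply: sumR_ge0 => i' _.
apply: Rmult_le_pos; first by apply: Rmult_le_pos; apply: Sel_ge0.
by apply: sumR_ge0 => x _; apply: Rmult_le_pos; [apply: Cross_ge0 | apply: Mut_ge0].
Qed.

Lemma kernel_ge0 P Q : 0 <= ker P Q.
Proof. by apply: prodR_ge0 => j _; apply: offspring_ge0. Qed.

Lemma offspring_sum_pred P (B : pred (bits n)) :
  \big[Rplus/0]_(y | B y) off P y =
  \big[Rplus/0]_(i : 'I_lam) \big[Rplus/0]_(i' : 'I_lam)
    (Sel P i * Sel P i' * \big[Rplus/0]_(x : bits n)
        (Cross (P i) (P i') x * \big[Rplus/0]_(y | B y) Mut x y)).
Proof.
rewrite /offspring exchange_big; apply: eq_bigr => i _.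
rewrite exchange_big; apply: eq_bigr => i' _.
rewrite -big_distrr; congr Rmult.
by rewrite exchange_big; apply: eq_bigr => x _; rewrite big_distrr.
Qed.

Lemma offspring_sum1 P : \big[Rplus/0]_(y : bits n) off P y = 1.
Proof.
have hcross i i' : \big[Rplus/0]_(x : bits n)
    (Cross (P i) (P i') x * \big[Rplus/0]_(y | xpredT y) Mut x y) = 1.
  rewrite -(proj2 (HCross (P i) (P i'))); apply: eq_bigr => x _.
  by rewrite (proj2 (HMut x)) Rmult_1_r.
have hsel i : \big[Rplus/0]_(i' : 'I_lam) (Sel P i * Sel P i') = Sel P i.
  by rewrite -big_distrr /= (proj2 (HSel P)) Rmult_1_r.
rewrite (offspring_sum_pred P xpredT) -(proj2 (HSel P)); apply: eq_bigr => i _.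
by rewrite -[RHS]hsel; apply: eq_bigr => i' _; rewrite hcross Rmult_1_r.
Qed.

Lemma offspring_sum_pred_le1 P (B : pred (bits n)) : \big[Rplus/0]_(y | B y) off P y <= 1.
Proof. by rewrite -(offspring_sum1 P); apply: ler_sumR_pred => // y _; apply: offspring_ge0. Qed.

(* The [lam] offspring are independent, so expectations of products factor. *)
Lemma kernel_prod P (f : bits n -> R) :
  \big[Rplus/0]_(Q : pop n lam) (ker P Q * \big[Rmult/1]_(i : 'I_lam) f (Q i)) =
  (\big[Rplus/0]_(y : bits n) (off P y * f y)) ^ lam.
Proof.
transitivity (\big[Rmult/1]_(i : 'I_lam) \big[Rplus/0]_(y : bits n) (off P y * f y)).
  by rewrite bigA_distr_bigA; apply: eq_bigr => Q _; rewrite /kernel -big_split.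
by rewrite prodR_const card_ord.
Qed.

Lemma kernel_sum1 P : \big[Rplus/0]_(Q : pop n lam) ker P Q = 1.
Proof.
have := kernel_prod P (fun _ => 1).
rewrite (eq_bigr (off P)) ?offspring_sum1 ?pow1 => [<-|y _]; last by rewrite Rmult_1_r.
by apply: eq_bigr => Q _; rewrite big1 ?Rmult_1_r.
Qed.

Lemma kernel_exp_count P (B : pred (bits n)) (k : R) :
  \big[Rplus/0]_(Q : pop n lam) (ker P Q * exp (- k * INR #|[pred i | B (Q i)]|)) =
  (1 - (1 - exp (- k)) * \big[Rplus/0]_(y | B y) off P y) ^ lam.
Proof.
rewrite (eq_bigr (fun Q => ker P Q *
  \big[Rmult/1]_(i : 'I_lam) (if B (Q i) then exp (- k) else 1))); last first.
  by move=> Q _; rewrite exp_mul_INR prodR_if.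
rewrite (kernel_prod P (fun y => if B y then exp (- k) else 1)); congr (_ ^ _).
rewrite (eq_bigr (fun y => off P y + (if B y then (exp (- k) - 1) * off P y else 0)));
  last by move=> y _; case: ifP => _; ring.
rewrite big_split /= offspring_sum1 -big_mkcond -big_distrr /=.
set S := (X in 1 + _ * X); have -> : \big[Rplus/0]_(y | B y) off P y = S by [].
ring.
Qed.

Lemma offspring_sum_pred_lb (P : pop n lam) (S S' : pred 'I_lam) (T B : pred (bits n)) (e mu : R) :
  (forall i i', S i -> S' i' -> e <= \big[Rplus/0]_(x | T x) Cross (P i) (P i') x) ->
  (forall x, T x -> mu <= \big[Rplus/0]_(y | B y) Mut x y) -> 0 <= e -> 0 <= mu ->
  (\big[Rplus/0]_(i | S i) Sel P i) * (\big[Rplus/0]_(i | S' i) Sel P i) * e * mu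
    <= \big[Rplus/0]_(y | B y) off P y.
Proof.
move=> hC hM he hmu; rewrite offspring_sum_pred.
have hSel := Sel_ge0; have hCr := Cross_ge0; have hMu := Mut_ge0.
have inner i i' : 0 <= \big[Rplus/0]_(x : bits n)
    (Cross (P i) (P i') x * \big[Rplus/0]_(y | B y) Mut x y).
  by apply: sumR_ge0 => x _; apply: Rmult_le_pos => //; apply: sumR_ge0.
have key i i' : S i -> S' i' -> e * mu <= \big[Rplus/0]_(x : bits n)
    (Cross (P i) (P i') x * \big[Rplus/0]_(y | B y) Mut x y).
  move=> Si Si'; apply: (Rle_trans _ _ _ _ (ler_sumR_predT _ T _)); last first.
    by move=> x; apply: Rmult_le_pos => //; apply: sumR_ge0.
  apply: (Rle_trans _ (\big[Rplus/0]_(x | T x) (Cross (P i) (P i') x * mu))).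
    by rewrite -big_distrl /=; apply: Rmult_le_compat_r => //; exact: hC.
  by apply: ler_sumR => x Tx; apply: Rmult_le_compat_l => //; apply: hM.
rewrite (Rmult_assoc _ e mu) Rmult_assoc big_distrl /=.
apply: (Rle_trans _ _ _ _ (ler_sumR_predT _ S _)); last first.
  by move=> i; apply: sumR_ge0 => i' _; apply: Rmult_le_pos; first apply: Rmult_le_pos.
apply: ler_sumR => i Si; rewrite big_distrl /= big_distrr /=.
apply: (Rle_trans _ _ _ _ (ler_sumR_predT _ S' _)); last first.
  by move=> i'; apply: Rmult_le_pos; first apply: Rmult_le_pos.
apply: ler_sumR => i' Si'.
have := Rmult_le_compat_l _ _ _ (Rmult_le_pos _ _ (hSel P i) (hSel P i')) (key i i' Si Si').
by rewrite !Rmult_assoc.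
Qed.

End Offspring.

(** * Levels of a population *)

Lemma sorted_geq_nth (s : seq nat) (j k : nat) :
  sorted geq s -> (1 <= k)%N -> (k <= count (fun x => j <= x)%N s)%N ->
  (j <= nth O s k.-1)%N.
Proof.
elim: s k => [|x s IH] k /=; first by case: k.
move=> hs hk; have hs' := path_sorted hs.
have hall := order_path_min (fun a b c h1 h2 => leq_trans h2 h1) hs.
case: k hk => [//|[|k]] _ /=.
- case hx: (j <= x)%N => //= hc.
  have /hasP[y ys hy] : has (fun y => j <= y)%N s by rewrite has_count.
  by move/allP: hall => /(_ y ys) /= hyx; rewrite -hx (leq_trans hy hyx).
- move=> hc; apply: (IH k.+1) => //.
  by move: hc; case: (j <= x)%N => /=; rewrite ?add1n ?add0n // => /ltnW.
Qed.

Section Levels.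
Variables (n lam m : nat) (lev : bits n -> nat).
Hypothesis Hlev : forall x, (1 <= lev x <= m.+1)%N.
Implicit Types Q : pop n lam.

Definition count_ge (j : nat) (Q : pop n lam) : nat := #|[pred i | (j <= lev (Q i))%N]|.

Lemma count_ge_mono j j' Q : (j <= j')%N -> (count_ge j' Q <= count_ge j Q)%N.
Proof.
by move=> hj; apply: subset_leq_card; apply/subsetP => i; rewrite !inE => /(leq_trans hj).
Qed.

Lemma count_ge_le j Q : (count_ge j Q <= lam)%N.
Proof. by rewrite -[X in (_ <= X)%N]card_ord; apply: max_card. Qed.

Lemma count_ge1 Q : count_ge 1 Q = lam.
Proof.
rewrite /count_ge -[RHS]card_ord; apply: eq_card => i; rewrite !inE.
by case/andP: (Hlev (Q i)).
Qed.

Lemma count_ge0 Q : count_ge 0 Q = lam.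
Proof. by apply/eqP; rewrite eqn_leq count_ge_le -{1}(count_ge1 Q) count_ge_mono. Qed.

Lemma count_ge_avoids Q : avoids lev m Q -> count_ge m.+1 Q = 0%N.
Proof. by move/forallP => h; apply: eq_card0 => i; rewrite !inE ltnNge h. Qed.

Lemma avoids_m_gt0 Q : (0 < lam)%N -> avoids lev m Q -> (0 < m)%N.
Proof.
move=> hlam /forallP h; have i : 'I_lam by exists 0%N.
by case/andP: (Hlev (Q i)) => h1 _; apply: leq_trans h1 (h i).
Qed.

Lemma rank_level_ge Q j k :
  (1 <= k)%N -> (k <= count_ge j Q)%N -> (j <= rank_level lev Q k)%N.
Proof.
move=> hk hc; apply: sorted_geq_nth => //; first by apply: sort_sorted => a b; exact: leq_total.
rewrite count_sort count_map; move: hc; rewrite /count_ge cardE /enum_mem size_filter.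
by rewrite filter_predT.
Qed.

(* The current level of [Q] is the highest level [j <= m] such that at least
   [k0 = ceil (gamma0 lam)] individuals of [Q] lie in [H_j]. *)
Variable k0 : nat.
Hypothesis Hk0_gt0 : (0 < k0)%N.
Hypothesis Hk0_le : (k0 <= lam)%N.

Definition cur_level (Q : pop n lam) : nat := \max_(j < m.+1 | (k0 <= count_ge j Q)%N) j.
Definition count_above (Q : pop n lam) : nat := count_ge (cur_level Q).+1 Q.

Lemma cur_level_count Q : (k0 <= count_ge (cur_level Q) Q)%N.
Proof.
rewrite /cur_level (bigmax_eq_arg ord0) /=; last by rewrite count_ge0.
by case: arg_maxnP => //=; rewrite count_ge0.
Qed.

Lemma cur_level_le Q : (cur_level Q <= m)%N.
Proof. by apply/bigmax_leqP => j _; rewrite -ltnS. Qed.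

Lemma cur_level_max Q j : (j <= m)%N -> (k0 <= count_ge j Q)%N -> (j <= cur_level Q)%N.
Proof. by move=> hj hc; apply: (bigmax_sup (Ordinal (hj : (j < m.+1)%N))). Qed.

Lemma cur_level_ge1 Q : (0 < m)%N -> (1 <= cur_level Q)%N.
Proof. by move=> hm; apply: cur_level_max => //; rewrite count_ge1. Qed.

Lemma count_above_lt Q : avoids lev m Q -> (count_above Q < k0)%N.
Proof.
move=> hQ; rewrite /count_above; case: (ltnP (cur_level Q) m) => hl.
  by rewrite ltnNge; apply/negP => /(cur_level_max hl); rewrite ltnn.
have -> : cur_level Q = m by apply/eqP; rewrite eqn_leq cur_level_le hl.
by rewrite count_ge_avoids.
Qed.

Lemma count_above_gt0 Q : avoids lev m Q -> (0 < count_above Q)%N -> (cur_level Q < m)%N.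
Proof.
move=> hQ hY; rewrite ltn_neqAle cur_level_le andbT; apply/eqP => he.
by move: hY; rewrite /count_above he count_ge_avoids.
Qed.

Lemma rank_level_cur Q i :
  (rank_level lev Q k0 <= lev (Q i))%N -> (cur_level Q <= lev (Q i))%N.
Proof.
move=> h; apply: leq_trans h.
by apply: rank_level_ge => //; apply: cur_level_count.
Qed.

End Levels.

(** * The potential function and its constants *)

Section Rates.
Variables (delta : R) (RR : nat).
Hypothesis Hdelta : 0 < delta.

Definition psi := Rmin (delta / 2) (1 / 2).
Definition rho := (1 + 2 * psi) / (1 + psi).
Definition kappa r := psi / rho ^ r.
Definition u_psi := 1 - exp (- psi).
Definition growth_weight := 7 / psi ^ 2.
Definition growth_max := growth_weight * INR RR.+1.
Definition growth_term (Y : nat) :=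
  growth_weight * \big[Rplus/0]_(r < RR.+1) exp (- kappa r * INR Y).

Lemma psi_bounds : 0 < psi <= 1 / 2 /\ 2 * psi <= delta.
Proof.
rewrite /psi; split; first split.
- by apply: Rmin_glb_lt; lra.
- exact: Rmin_r.
- by have := Rmin_l (delta / 2) (1 / 2); lra.
Qed.

Lemma rho_ge1 : 1 <= rho.
Proof.
have [[h1 h2] _] := psi_bounds; rewrite /rho.
apply: (Rmult_le_reg_r (1 + psi)); first lra.
by rewrite /Rdiv Rmult_assoc Rinv_l; lra.
Qed.

Lemma rho_gt0 : 0 < rho.
Proof. by have := rho_ge1; lra. Qed.

Lemma kappa_ge0 r : 0 <= kappa r.
Proof.
have [[h1 h2] _] := psi_bounds.
by apply/Rlt_le/Rdiv_lt_0_compat => //; apply: pow_lt; exact: rho_gt0.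
Qed.

Lemma kappa_le_psi r : kappa r <= psi.
Proof.
have [[h1 _] _] := psi_bounds; have hr := pow_R1_Rle _ r rho_ge1.
rewrite /kappa; apply: (Rmult_le_reg_r (rho ^ r)); first lra.
by rewrite /Rdiv Rmult_assoc Rinv_l; nra.
Qed.

Lemma u_psi_bounds : psi / (1 + psi) <= u_psi <= 1.
Proof.
have [[h1 h2] _] := psi_bounds; split; first by apply: div_1p_le_1m_exp; lra.
by have := exp_pos (- psi); rewrite /u_psi; lra.
Qed.

Lemma u_psi_gt0 : 0 < u_psi.
Proof.
have [[h1 h2] _] := psi_bounds; have := u_psi_bounds.
suff : 0 < psi / (1 + psi) by lra.
by apply: Rdiv_lt_0_compat; lra.
Qed.

Lemma growth_weight_gt0 : 0 < growth_weight.
Proof.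
have [[h1 h2] _] := psi_bounds.
by apply: Rdiv_lt_0_compat; [lra | apply: pow_lt].
Qed.

Lemma growth_max_ge0 : 0 <= growth_max.
Proof. by apply: Rmult_le_pos; [have := growth_weight_gt0; lra | exact: pos_INR]. Qed.

Lemma growth_term_bounds Y : 0 <= growth_term Y <= growth_max.
Proof.
have hC := growth_weight_gt0; split.
  by apply: Rmult_le_pos; [lra | apply: sumR_ge0 => r _; apply/Rlt_le/exp_pos].
apply: Rmult_le_compat_l; first lra.
rewrite -(sumR_ord1 RR.+1); apply: ler_sumR => r _.
rewrite -exp_0; apply: exp_le_compat.
by have := kappa_ge0 r; have := pos_INR Y; nra.
Qed.

Lemma growth_term0 : growth_term 0 = growth_max.
Proof.
rewrite /growth_term /growth_max -(sumR_ord1 RR.+1); congr Rmult.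
by apply: eq_bigr => r _; rewrite /= Rmult_0_r exp_0.
Qed.

Lemma sum_exp_kappa_telescope (Y : R) (N : nat) :
  \big[Rplus/0]_(r < N.+1) (exp (- kappa r * Y) - exp (- (rho * kappa r) * Y)) =
  exp (- kappa N * Y) - exp (- (rho * psi) * Y).
Proof.
have hr := rho_gt0; elim: N => [|N IH].
  by rewrite big_ord_recr big_ord0 /= /kappa /= Rdiv_1_r; ring.
rewrite big_ord_recr /= IH.
have -> : rho * kappa N.+1 = kappa N.
  by rewrite /kappa /=; field; split; [apply: pow_nonzero |]; lra.
ring.
Qed.

Lemma rho_mul_le (k : R) : 0 <= k <= psi -> rho * k <= (1 - exp (- k)) * (1 + delta).
Proof.
move=> hk; have [[h1 h2] hd] := psi_bounds.
apply: (Rle_trans _ (k / (1 + k) * (1 + delta))); last first.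
  by apply: Rmult_le_compat_r; [lra | apply: div_1p_le_1m_exp; lra].
have -> : k / (1 + k) * (1 + delta) = k * ((1 + delta) / (1 + k)) by field; lra.
rewrite /rho Rmult_comm; apply: Rmult_le_compat_l; first lra.
apply: (Rmult_le_reg_r ((1 + k) * (1 + psi))); first nra.
have -> : (1 + 2 * psi) / (1 + psi) * ((1 + k) * (1 + psi)) = (1 + 2 * psi) * (1 + k) by field; lra.
have -> : (1 + delta) / (1 + k) * ((1 + k) * (1 + psi)) = (1 + delta) * (1 + psi) by field; lra.
nra.
Qed.

Lemma ln_rho_ge : psi / 2 <= ln rho.
Proof.
have [[h1 h2] _] := psi_bounds; have h := exp_ineq1_le (- ln rho).
rewrite exp_Ropp exp_ln in h; last exact: rho_gt0.
have e : / rho = 1 - psi / (1 + 2 * psi) by rewrite /rho; field; lra.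
rewrite e in h.
suff : psi / 2 <= psi / (1 + 2 * psi) by lra.
by apply: Rmult_le_compat_l; [lra | apply: Rinv_le_contravar; lra].
Qed.

(* The geometric family of rates [kappa r] is what makes [growth_term] drop by
   at least 2 whenever the count above the current level grows by a factor [rho]. *)
Lemma growth_term_gain (lam : nat) (gamma0 : R) (Y : nat) :
  2 * psi * gamma0 * INR lam <= rho ^ RR ->
  (1 <= Y)%N -> INR Y < gamma0 * INR lam ->
  2 <= growth_term Y - growth_weight *
         \big[Rplus/0]_(r < RR.+1) exp (- (rho * kappa r) * INR Y).
Proof.
move=> hR hY hYlt; have [[h1 h2] _] := psi_bounds; have hr1 := rho_ge1.
rewrite /growth_term -Rmult_minus_distr_l -sumRB sum_exp_kappa_telescope.
set y := INR Y in hYlt *; have hy : 1 <= y by apply: (le_INR_leq hY).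
have hrR : 1 <= rho ^ RR by apply: pow_R1_Rle.
set A := kappa RR * y.
have hAr : A * rho ^ RR = psi * y by rewrite /A /kappa; field; lra.
have hpy : 0 <= psi * y <= psi * (gamma0 * INR lam) by split; nra.
have hA : 0 <= A <= 1 / 2 /\ A <= psi * y.
  by split; [split |]; apply: (Rmult_le_reg_r (rho ^ RR)); rewrite ?hAr; nra.
set x := (rho - 1) * psi.
have hx : x = psi ^ 2 / (1 + psi) by rewrite /x /rho; field; lra.
have hx0 : 0 <= x by rewrite hx; apply: Rdiv_le_0_compat; nra.
have heA : 1 / 2 <= exp (- A) by have := exp_ineq1_le (- A); lra.
have hex : exp (- (rho * psi * y - A)) <= / (1 + x).
  apply: Rle_trans (exp_neg_le_inv hx0); apply: exp_le_compat.
  have : x <= x * y by nra.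
  rewrite /x; nra.
have hfin : 2 <= growth_weight * (1 / 2 * (1 - / (1 + x))).
  have -> : growth_weight * (1 / 2 * (1 - / (1 + x))) = 7 / (2 * (1 + psi + psi ^ 2)).
    by rewrite hx /growth_weight; field; repeat split; nra.
  apply: (Rmult_le_reg_r (2 * (1 + psi + psi ^ 2))); first nra.
  by rewrite /Rdiv Rmult_assoc Rinv_l; nra.
have hinv : / (1 + x) <= 1 by rewrite -Rinv_1; apply: Rinv_le_contravar; lra.
have -> : exp (- kappa RR * y) - exp (- (rho * psi) * y) =
          exp (- A) * (1 - exp (- (rho * psi * y - A))).
  by rewrite Rmult_minus_distr_l Rmult_1_r -exp_plus /A; congr (exp _ - exp _); ring.
apply: Rle_trans hfin _; apply: Rmult_le_compat_l; first by have := growth_weight_gt0; lra.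
by apply: Rmult_le_compat; lra.
Qed.

End Rates.

Section Weights.
Variables (lam m : nat) (s : nat -> R) (p0 delta gamma0 : R) (RR : nat).
Hypothesis Hlam : (0 < lam)%N.
Hypothesis Hs : forall j, (1 <= j <= m)%N -> 0 < s j <= 1.
Hypothesis Hp0 : 0 < p0 <= 1.
Hypothesis Hdelta : 0 < delta.
Hypothesis Hg0 : 0 < gamma0 < 1.
Hypothesis Hg0p : gamma0 * (1 + delta) <= p0.

Local Notation psi := (psi delta).
Local Notation u_psi := (u_psi delta).
Local Notation growth_max := (growth_max delta RR).

(* [z_up j] bounds from below the probability that one offspring of a
   population at level [j] lies in [H_(j+1)]. *)
Definition z_up j := (1 + delta) * gamma0 * s j / p0.
Definition pi_up j := 1 - (1 - z_up j * u_psi) ^ lam.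
Definition wait_weight j := 2 / pi_up j.
Definition level_tail l := \big[Rplus/0]_(l.+1 <= j < m.+1) (wait_weight j + growth_max).
Definition potential_max := level_tail 0.

Lemma z_up_bounds j : (1 <= j <= m)%N -> 0 < z_up j <= 1.
Proof.
move=> hj; have [hs1 hs2] := Hs hj; rewrite /z_up; split.
  by apply: Rdiv_lt_0_compat; last lra; apply: Rmult_lt_0_compat; nra.
apply: (Rmult_le_reg_r p0); first lra.
by rewrite /Rdiv Rmult_assoc Rinv_l; nra.
Qed.

Lemma pi_up_bounds j : (1 <= j <= m)%N -> z_up j * u_psi <= pi_up j <= 1.
Proof.
move=> hj; have hz := z_up_bounds hj; have hu := u_psi_bounds Hdelta; have hu0 := u_psi_gt0 Hdelta.
have h0 : 0 <= 1 - z_up j * u_psi <= 1 by split; nra.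
rewrite /pi_up; split; first by have := pow_le_self h0 Hlam; lra.
by have := pow_le _ lam (proj1 h0); lra.
Qed.

Lemma pi_up_gt0 j : (1 <= j <= m)%N -> 0 < pi_up j.
Proof.
move=> hj; have [h _] := pi_up_bounds hj.
by have := z_up_bounds hj; have := u_psi_gt0 Hdelta; nra.
Qed.

Lemma wait_weight_ge0 j : (1 <= j <= m)%N -> 0 <= wait_weight j.
Proof. by move=> hj; apply/Rlt_le/Rdiv_lt_0_compat; [lra | exact: pi_up_gt0]. Qed.

Lemma wait_weight_pi_up j : (1 <= j <= m)%N -> wait_weight j * pi_up j = 2.
Proof. by move=> hj; have h := pi_up_gt0 hj; rewrite /wait_weight; field; lra. Qed.

Lemma level_tail_ge0 l : 0 <= level_tail l.
Proof.
rewrite /level_tail big_nat_cond; apply: sumR_ge0 => j /andP[/andP[h1 h2] _].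
have := (growth_max_ge0 RR Hdelta); have : 0 <= wait_weight j by apply: wait_weight_ge0; lia.
lra.
Qed.

Lemma level_tail_pred l : (1 <= l <= m)%N ->
  level_tail l.-1 = wait_weight l + growth_max + level_tail l.
Proof. by case/andP=> h1 h2; rewrite /level_tail prednK // big_ltn. Qed.

Lemma level_tail_anti l l' : (l <= l')%N -> level_tail l' <= level_tail l.
Proof.
move=> hl; rewrite /level_tail; case: (leqP l'.+1 m.+1) => hl'.
  rewrite [X in _ <= X](big_cat_nat _ (n := l'.+1)) //=.
  suff : 0 <= \big[Rplus/0]_(l.+1 <= j < l'.+1) (wait_weight j + growth_max) by lra.
  rewrite big_nat_cond; apply: sumR_ge0 => j /andP[/andP[h1 h3] _].
  have := (growth_max_ge0 RR Hdelta); have : 0 <= wait_weight j by apply: wait_weight_ge0; lia.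
  lra.
by rewrite big_geq; [exact: level_tail_ge0 | lia].
Qed.

Lemma potential_max_ge0 : 0 <= potential_max.
Proof. exact: level_tail_ge0. Qed.

End Weights.

(* All powers of [t = 1 / psi >= 2] appearing on the left are dominated by [48 t^5]. *)
Lemma level_budget_arith (psi lamR L zinv : R) :
  0 < psi <= 1 / 2 -> 1 <= lamR -> 0 <= L -> 0 <= zinv ->
  lamR * (2 + 7 / psi ^ 2 * (2 + 2 / psi * (L + 6 / psi))) + 3 / psi * zinv <=
  48 / psi ^ 5 * (lamR * (1 + L) + zinv).
Proof.
move=> hp hl hL hz; set t := / psi.
have ht : 2 <= t by rewrite /t; apply: (Rmult_le_reg_r psi); [lra | rewrite Rinv_l; lra].
have -> : 7 / psi ^ 2 * (2 + 2 / psi * (L + 6 / psi)) =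
          14 * t ^ 2 + 14 * t ^ 3 * L + 84 * t ^ 4 by rewrite /t; field; lra.
have -> : 3 / psi = 3 * t by rewrite /t; field; lra.
have -> : 48 / psi ^ 5 = 48 * t ^ 5 by rewrite /t; field; lra.
have ht2 : 4 <= t ^ 2 by nra.
have ht4 : t ^ 4 = t ^ 2 * t ^ 2 by ring.
have ht3 : t ^ 3 = t * t ^ 2 by ring.
have ht5 : t ^ 5 = t * t ^ 4 by ring.
have p1 : 2 + 14 * t ^ 2 + 84 * t ^ 4 <= 48 * t ^ 5 by nra.
have p2 : 14 * t ^ 3 <= 48 * t ^ 5 by nra.
have p3 : 3 * t <= 48 * t ^ 5 by nra.
have q1 : lamR * (2 + 14 * t ^ 2 + 84 * t ^ 4) <= lamR * (48 * t ^ 5)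
  by apply: Rmult_le_compat_l; lra.
have q2 : lamR * L * (14 * t ^ 3) <= lamR * L * (48 * t ^ 5) by apply: Rmult_le_compat_l; nra.
have q3 : zinv * (3 * t) <= zinv * (48 * t ^ 5) by apply: Rmult_le_compat_l; lra.
nra.
Qed.

(* The three summands of the per-level cost are each at most [1/3] once the
   factor [exp (- a lam)] is split as [e^2] with [e = exp (- a lam / 2)]: one
   factor absorbs [m] by (C5), leaving [m e <= mu], the other absorbs
   [L <= c lam]. *)
Lemma fall_budget_terms (psi lamR L Z a mu mR e : R) :
  0 < psi <= 1 / 2 -> 1 <= lamR -> 0 <= L <= psi ^ 4 / 24 * lamR -> 0 <= Z -> 0 < a ->
  0 < e <= 1 -> 0 <= mR -> mR * e <= mu -> a * lamR * e <= 2 ->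
  mu <= psi ^ 5 / 768 -> mu / a <= psi ^ 5 / 384 -> 3 / psi * Z * mu <= 1 / 3 ->
  mR * (2 + 14 / psi ^ 2 + 84 / psi ^ 4 + 14 / psi ^ 3 * L + 3 / psi * Z / lamR) * (e * e) <= 1.
Proof.
move=> hp hl [hL0 hL] hZ ha he hm hme hae hmu1 hmua hmu3.
rewrite (_ : mR * _ * (e * e) = mR * e * (2 + 14 / psi ^ 2 + 84 / psi ^ 4 +
  14 / psi ^ 3 * L + 3 / psi * Z / lamR) * e); last by ring.
have hk : 0 <= mR * e <= mu by split; [apply: Rmult_le_pos; lra | exact: hme].
set k := mR * e in hk *.
have [hpsi5 [hpsi3 hpsi6]] : psi ^ 5 <= 1 /\ psi ^ 3 <= 1 /\ psi ^ 6 <= 1.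
  by split; [| split]; apply: pow_le_one; lra.
have hp3 : 0 < psi ^ 3 by apply: pow_lt; lra.
have hp4 : 0 < psi ^ 4 by apply: pow_lt; lra.
have T1 : (2 + 14 / psi ^ 2 + 84 / psi ^ 4) * k * e <= 1 / 3.
  have -> : (2 + 14 / psi ^ 2 + 84 / psi ^ 4) * k * e =
            (2 * psi ^ 5 + 14 * psi ^ 3 + 84 * psi) * (k * e / psi ^ 5) by field; lra.
  have : k * e / psi ^ 5 <= 1 / 768.
    apply: (Rmult_le_reg_r (psi ^ 5)); first by apply: pow_lt; lra.
    by rewrite /Rdiv Rmult_assoc Rinv_l; [nra | apply: pow_nonzero; lra].
  have : 0 <= k * e / psi ^ 5 by apply: Rdiv_le_0_compat; [nra | apply: pow_lt; lra].
  nra.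
have T2 : 14 / psi ^ 3 * (k * (L * e)) <= 1 / 3.
  have hkL : k * (L * e) <= psi ^ 4 / 24 * (mu / a) * (a * lamR * e).
    have -> : psi ^ 4 / 24 * (mu / a) * (a * lamR * e) = mu * (psi ^ 4 / 24 * lamR * e).
      by field; lra.
    by apply: Rmult_le_compat; nra.
  have hkL2 : psi ^ 4 / 24 * (mu / a) * (a * lamR * e) <= psi ^ 4 / 24 * (psi ^ 5 / 384) * 2.
    apply: Rmult_le_compat => //.
    - by apply: Rmult_le_pos; [lra | apply: Rdiv_le_0_compat; lra].
    - by apply: Rmult_le_pos; [apply: Rmult_le_pos |]; lra.
    - by apply: Rmult_le_compat_l; lra.
  have -> : 14 / psi ^ 3 * (k * (L * e)) = 14 * (k * (L * e)) / psi ^ 3 by field; lra.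
  apply: (Rmult_le_reg_r (psi ^ 3)) => //; rewrite /Rdiv Rmult_assoc Rinv_l; last lra.
  nra.
have T3 : 3 / psi * Z / lamR * k * e <= 1 / 3.
  have h3 : 0 <= 3 / psi * Z by apply: Rmult_le_pos => //; apply: Rdiv_le_0_compat; lra.
  have hil : 0 < / lamR <= 1.
    by split; [apply: Rinv_0_lt_compat | rewrite -Rinv_1; apply: Rinv_le_contravar]; lra.
  have -> : 3 / psi * Z / lamR * k * e = 3 / psi * Z * (k * (e * / lamR)) by field; lra.
  apply: Rle_trans hmu3; apply: Rmult_le_compat_l => //.
  by rewrite -[X in _ <= X]Rmult_1_r; apply: Rmult_le_compat; nra.
have -> : k * (2 + 14 / psi ^ 2 + 84 / psi ^ 4 + 14 / psi ^ 3 * L + 3 / psi * Z / lamR) * e =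
  (2 + 14 / psi ^ 2 + 84 / psi ^ 4) * k * e + 14 / psi ^ 3 * (k * (L * e))
  + 3 / psi * Z / lamR * k * e by ring.
lra.
Qed.

Lemma fall_budget_arith (psi delta gamma0 p0 sst lamR mR L : R) :
  0 < psi <= 1 / 2 -> 0 < delta -> 0 < gamma0 -> gamma0 * (1 + delta) <= p0 -> p0 <= 1 ->
  0 < sst <= 1 -> 1 <= lamR -> 0 <= mR -> 0 <= L <= psi ^ 4 / 24 * lamR ->
  ln (32 * mR * p0 / ((delta * gamma0) ^ 2 * (psi ^ 4 / 24) * sst * psi))
     <= delta ^ 2 * gamma0 / (2 * (1 + delta)) * lamR / 2 ->
  mR * (2 + 14 / psi ^ 2 + 84 / psi ^ 4 + 14 / psi ^ 3 * L
        + 3 / psi * (p0 / ((1 + delta) * gamma0 * sst)) / lamR)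
    * exp (- (delta ^ 2 * gamma0 / (2 * (1 + delta))) * lamR) <= 1.
Proof.
move=> hp hd hg hgp hp1 hs hl hm hL hC5.
case: (Req_dec mR 0) => [->|hm0]; first by rewrite !Rmult_0_l; lra.
set a := delta ^ 2 * gamma0 / (2 * (1 + delta)) in hC5 *.
have ha : 0 < a by apply: Rdiv_lt_0_compat; [apply: Rmult_lt_0_compat; [apply: pow_lt |] |]; lra.
have hp4 : 0 < psi ^ 4 by apply: pow_lt; lra.
have hdg : 0 < delta * gamma0 <= p0 by split; nra.
set D := (delta * gamma0) ^ 2 * (psi ^ 4 / 24) * sst * psi in hC5.
have hD : 0 < D by rewrite /D; repeat apply: Rmult_lt_0_compat; try apply: pow_lt; lra.
set e := exp (- (a * lamR) / 2).
have he : 0 < e <= 1 by split; [apply: exp_pos | rewrite -exp_0; apply: exp_le_compat; nra].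
have hme : mR * e <= D / (32 * p0).
  have hA : 32 * mR * p0 / D * e <= 1.
    by apply: ln_le_half_exp hC5; apply: Rdiv_lt_0_compat => //; have : 0 < mR; nra.
  have -> : mR * e = 32 * mR * p0 / D * e * (D / (32 * p0)) by field; lra.
  have : 0 < D / (32 * p0) by apply: Rdiv_lt_0_compat; lra.
  nra.
have hcs : sst * psi <= psi by nra.
have hdg2 : (delta * gamma0) ^ 2 <= p0 by nra.
have -> : exp (- a * lamR) = e * e by rewrite /e -exp_plus; f_equal; field.
have hsp : 0 <= psi ^ 4 * (sst * psi) <= psi ^ 5.
  have -> : psi ^ 5 = psi ^ 4 * psi by ring.
  by split; [apply: Rmult_le_pos; nra | apply: Rmult_le_compat_l; nra].
have hmu : (delta * gamma0) ^ 2 * (psi ^ 4 * (sst * psi)) <= p0 * psi ^ 5.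
  by apply: Rmult_le_compat; try lra; apply: pow_le; lra.
have hmu' : gamma0 * (1 + delta) * (psi ^ 4 * (sst * psi)) <= p0 * psi ^ 5.
  by apply: Rmult_le_compat; nra.
apply: (fall_budget_terms (a := a) (mu := D / (32 * p0))) => //.
- by apply: Rdiv_le_0_compat; [| apply: Rmult_lt_0_compat]; nra.
- by rewrite /e; apply: mul_exp_neg_half_le; nra.
- apply: (Rmult_le_reg_r (32 * p0)); first lra.
  rewrite /D; have -> : (delta * gamma0) ^ 2 * (psi ^ 4 / 24) * sst * psi / (32 * p0) * (32 * p0)
    = (delta * gamma0) ^ 2 * (psi ^ 4 * (sst * psi)) / 24 by field; lra.
  have -> : psi ^ 5 / 768 * (32 * p0) = p0 * psi ^ 5 / 24 by field.
  lra.
- apply: (Rmult_le_reg_r (16 * p0)); first lra.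
  have -> : D / (32 * p0) / a * (16 * p0) = gamma0 * (1 + delta) * (psi ^ 4 * (sst * psi)) / 24.
    by rewrite /D /a; field; repeat split; lra.
  have -> : psi ^ 5 / 384 * (16 * p0) = p0 * psi ^ 5 / 24 by field.
  lra.
- have -> : 3 / psi * (p0 / ((1 + delta) * gamma0 * sst)) * (D / (32 * p0)) =
            psi ^ 4 / 256 * (delta * gamma0) * (delta / (1 + delta)).
    by rewrite /D; field; repeat split; lra.
  have [hdd0 hdd] := div_1p_bounds (Rlt_le _ _ hd).
  have hp41 : psi ^ 4 <= 1 by apply: pow_le_one; lra.
  have hw : 0 <= delta * gamma0 * (delta / (1 + delta)) <= 1 by split; nra.
  nra.
Qed.

Section PotentialBounds.
Variables (lam m : nat) (s : nat -> R) (p0 delta gamma0 : R) (RR : nat).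
Hypothesis Hlam : (0 < lam)%N.
Hypothesis Hs : forall j, (1 <= j <= m)%N -> 0 < s j <= 1.
Hypothesis Hp0 : 0 < p0 <= 1.
Hypothesis Hdelta : 0 < delta.
Hypothesis Hg0 : 0 < gamma0 < 1.
Hypothesis Hg0p : gamma0 * (1 + delta) <= p0.
Hypothesis HR : INR RR <= 1 + 2 / psi delta *
  Rmax 0 (ln (2 * psi delta * gamma0 * INR lam)).

Local Notation psi := (psi delta).
Local Notation wait_weight := (wait_weight lam s p0 delta gamma0).
Local Notation growth_max := (growth_max delta RR).
Local Notation potential_max := (potential_max lam m s p0 delta gamma0 RR).

Definition ln_term := ln (1 + psi ^ 4 / 24 * INR lam).

Let c_lam_ge0 : 0 <= psi ^ 4 / 24 * INR lam.
Proof.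
have [[h1 _] _] := psi_bounds Hdelta.
by apply: Rmult_le_pos; [apply: Rdiv_le_0_compat; [apply: pow_le |] | apply: pos_INR]; lra.
Qed.

Lemma ln_term_bounds : 0 <= ln_term <= psi ^ 4 / 24 * INR lam.
Proof.
have hc := c_lam_ge0.
by split; [apply: ln_1p_ge0 | apply: ln_1p_le].
Qed.

Lemma lam_wait_weight_le j : (1 <= j <= m)%N ->
  INR lam * wait_weight j <= 2 * INR lam + 3 / psi * (p0 / ((1 + delta) * gamma0 * s j)).
Proof.
move=> hj; have hz := z_up_bounds Hs Hp0 Hdelta Hg0 Hg0p hj.
have hu := u_psi_bounds Hdelta; have hu0 := u_psi_gt0 Hdelta.
have [[h1 h2] _] := psi_bounds Hdelta; have hl := INR_ge1 Hlam.
set X := INR lam * (z_up s p0 delta gamma0 j * u_psi delta).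
have hX : 0 < X by apply: Rmult_lt_0_compat; nra.
have hpi : X / (1 + X) <= pi_up lam s p0 delta gamma0 j.
  have := pow_1m_le_inv lam (x := z_up s p0 delta gamma0 j * u_psi delta) ltac:(split; nra).
  have -> : X / (1 + X) = 1 - / (1 + X) by field; lra.
  rewrite /pi_up -/X; lra.
have hW : wait_weight j <= 2 + 2 / X.
  rewrite /wait_weight; have -> : 2 + 2 / X = 2 / (X / (1 + X)) by field; lra.
  apply: Rmult_le_compat_l; first lra.
  by apply: Rinv_le_contravar => //; apply: Rdiv_lt_0_compat; lra.
have [hs1 _] := Hs hj.
have hinv : 2 / u_psi delta <= 3 / psi.
  apply: (Rle_trans _ (2 / (psi / (1 + psi)))).
    apply: Rmult_le_compat_l; first lra.
    by apply: Rinv_le_contravar; [apply: Rdiv_lt_0_compat | ]; lra.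
  have -> : 2 / (psi / (1 + psi)) = (2 + 2 * psi) / psi by field; lra.
  by apply: Rmult_le_compat_r; [apply/Rlt_le/Rinv_0_lt_compat |]; lra.
have hzi : 0 <= p0 / ((1 + delta) * gamma0 * s j).
  by apply: Rdiv_le_0_compat; [| repeat apply: Rmult_lt_0_compat]; lra.
apply: (Rle_trans _ (INR lam * (2 + 2 / X))); first by apply: Rmult_le_compat_l; [apply: pos_INR |].
have -> : INR lam * (2 + 2 / X) =
          2 * INR lam + 2 / u_psi delta * (p0 / ((1 + delta) * gamma0 * s j)).
  by rewrite /X /z_up; field; repeat split; nra.
by have := Rmult_le_compat_r _ _ _ hzi hinv; lra.
Qed.

Lemma ln_count_le : ln (2 * psi * gamma0 * INR lam) <= ln_term + 6 / psi.
Proof.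
have [[h1 h2] _] := psi_bounds Hdelta; have hl := INR_ge1 Hlam.
have hx : 0 < 2 * psi * gamma0 * INR lam by repeat apply: Rmult_lt_0_compat; lra.
have h48 : 0 < 48 / psi ^ 3 by apply: Rdiv_lt_0_compat; [| apply: pow_lt]; lra.
have hc := c_lam_ge0.
have hle : 2 * psi * gamma0 * INR lam <= 48 / psi ^ 3 * (1 + psi ^ 4 / 24 * INR lam).
  have -> : 48 / psi ^ 3 * (1 + psi ^ 4 / 24 * INR lam) = 48 / psi ^ 3 + 2 * psi * INR lam.
    by field; lra.
  have : 0 <= 2 * psi * INR lam by nra.
  nra.
apply: (Rle_trans _ _ _ (ln_le _ _ hx hle)); rewrite ln_mult // ?/ln_term; last lra.
suff : ln (48 / psi ^ 3) <= 6 / psi by lra.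
have h4 : 0 < 4 / psi by apply: Rdiv_lt_0_compat; lra.
have h64 : 48 / psi ^ 3 <= (4 / psi) ^ 3.
  have -> : (4 / psi) ^ 3 = 64 / psi ^ 3 by field; lra.
  by apply: Rmult_le_compat_r; [apply/Rlt_le/Rinv_0_lt_compat/pow_lt |]; lra.
apply: (Rle_trans _ _ _ (ln_le _ _ h48 h64)); rewrite ln_pow //.
have -> : 6 / psi = INR 3 * (4 / psi / 2) by rewrite /=; field; lra.
by apply: Rmult_le_compat_l; [apply: pos_INR | apply: ln_le_half].
Qed.

Lemma growth_max_le : growth_max <= 7 / psi ^ 2 * (2 + 2 / psi * (ln_term + 6 / psi)).
Proof.
have [[h1 h2] _] := psi_bounds Hdelta; have [hL0 _] := ln_term_bounds.
rewrite /growth_max /growth_weight S_INR; apply: Rmult_le_compat_l.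
  by apply: Rdiv_le_0_compat; [| apply: pow_lt]; lra.
have h2p : 0 <= 2 / psi by apply: Rdiv_le_0_compat; lra.
have hmax : Rmax 0 (ln (2 * psi * gamma0 * INR lam)) <= ln_term + 6 / psi.
  apply: Rmax_lub; last exact: ln_count_le.
  have : 0 <= 6 / psi by apply: Rdiv_le_0_compat; lra.
  lra.
by have := Rmult_le_compat_l _ _ _ h2p hmax; lra.
Qed.

Lemma lam_level_cost_le j : (1 <= j <= m)%N ->
  INR lam * (wait_weight j + growth_max) <=
  INR lam * (2 + 7 / psi ^ 2 * (2 + 2 / psi * (ln_term + 6 / psi))) +
  3 / psi * (p0 / ((1 + delta) * gamma0 * s j)).
Proof.
move=> hj; have := lam_wait_weight_le hj.
have := Rmult_le_compat_l _ _ _ (pos_INR lam) growth_max_le.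
lra.
Qed.

Lemma lam_potential_max_le : INR lam * potential_max <=
  48 / psi ^ 5 * (INR m * INR lam * (1 + ln_term) +
     p0 / ((1 + delta) * gamma0) * \big[Rplus/0]_(1 <= j < m.+1) (/ s j)).
Proof.
have [hpsi _] := psi_bounds Hdelta; have [hL0 _] := ln_term_bounds.
rewrite /potential_max /level_tail big_distrr.
have -> : INR m * INR lam * (1 + ln_term) =
          \big[Rplus/0]_(1 <= j < m.+1) (INR lam * (1 + ln_term)).
  by rewrite sumR_const_nat subSS subn0; ring.
rewrite big_distrr -big_split big_distrr /=.
rewrite big_nat_cond [X in _ <= X]big_nat_cond; apply: ler_sumR => j /andP[hj _].
have hj' : (1 <= j <= m)%N by lia.
have [hs1 _] := Hs hj'.
have hzi : 0 <= p0 / ((1 + delta) * gamma0 * s j).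
  by apply: Rdiv_le_0_compat; [| repeat apply: Rmult_lt_0_compat]; lra.
have -> : p0 / ((1 + delta) * gamma0) * / s j = p0 / ((1 + delta) * gamma0 * s j).
  by field; repeat split; lra.
apply: Rle_trans (level_budget_arith hpsi (INR_ge1 Hlam) hL0 hzi).
exact: lam_level_cost_le.
Qed.

Lemma level_cost_le_star j s_star : (1 <= j <= m)%N -> 0 < s_star <= s j ->
  wait_weight j + growth_max <= 2 + 14 / psi ^ 2 + 84 / psi ^ 4 + 14 / psi ^ 3 * ln_term +
    3 / psi * (p0 / ((1 + delta) * gamma0 * s_star)) / INR lam.
Proof.
move=> hj hss; have [hpsi _] := psi_bounds Hdelta; have hl := INR_ge1 Hlam.
have hzz : p0 / ((1 + delta) * gamma0 * s j) <= p0 / ((1 + delta) * gamma0 * s_star).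
  apply: Rmult_le_compat_l; first lra.
  by apply: Rinv_le_contravar; [repeat apply: Rmult_lt_0_compat | apply: Rmult_le_compat_l]; nra.
have h3 : 3 / psi * (p0 / ((1 + delta) * gamma0 * s j)) <=
          3 / psi * (p0 / ((1 + delta) * gamma0 * s_star)).
  by apply: Rmult_le_compat_l => //; apply: Rdiv_le_0_compat; lra.
apply: (Rmult_le_reg_l (INR lam)); first lra.
apply: Rle_trans (lam_level_cost_le hj) _.
have -> : 7 / psi ^ 2 * (2 + 2 / psi * (ln_term + 6 / psi)) =
  14 / psi ^ 2 + 84 / psi ^ 4 + 14 / psi ^ 3 * ln_term by field; lra.
have -> : forall B, INR lam * (B + 3 / psi * (p0 / ((1 + delta) * gamma0 * s_star)) / INR lam)
  = INR lam * B + 3 / psi * (p0 / ((1 + delta) * gamma0 * s_star)) by move=> B; field; lra.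
lra.
Qed.

Lemma potential_max_exp_le1 s_star :
  (forall j, (1 <= j <= m)%N -> s_star <= s j) -> 0 < s_star <= 1 ->
  INR lam >= 2 / (delta ^ 2 * gamma0 / (2 * (1 + delta))) *
    ln (32 * INR m * p0 / ((delta * gamma0) ^ 2 * (psi ^ 4 / 24) * s_star * psi)) ->
  potential_max * exp (- (delta ^ 2 * gamma0 / (2 * (1 + delta))) * INR lam) <= 1.
Proof.
move=> Hstar Hss /Rge_le HC5.
have [hpsi _] := psi_bounds Hdelta; have hl := INR_ge1 Hlam; have hL := ln_term_bounds.
have ha : 0 < delta ^ 2 * gamma0 / (2 * (1 + delta)).
  by apply: Rdiv_lt_0_compat; [apply: Rmult_lt_0_compat; [apply: pow_lt |] |]; lra.
set a := delta ^ 2 * gamma0 / (2 * (1 + delta)) in ha HC5 *.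
apply: Rle_trans (fall_budget_arith hpsi Hdelta (proj1 Hg0) Hg0p (proj2 Hp0) Hss hl
  (pos_INR m) hL _); last first.
  apply: (Rmult_le_reg_l (2 / a)); first by apply: Rdiv_lt_0_compat; lra.
  by have -> : 2 / a * (a * INR lam / 2) = INR lam by field; lra.
apply: Rmult_le_compat_r; first exact/Rlt_le/exp_pos.
have -> : forall B, INR m * B = \big[Rplus/0]_(1 <= j < m.+1) B.
  by move=> B; rewrite sumR_const_nat subSS subn0.
rewrite /potential_max /level_tail big_nat_cond [X in _ <= X]big_nat_cond.
apply: ler_sumR => j /andP[hj _]; apply: level_cost_le_star; first lia.
by have := Hstar j ltac:(lia); lra.
Qed.

End PotentialBounds.

(** * Selection pressure *)

Section Selection.
Variables (n lam m : nat) (Sel : pop n lam -> 'I_lam -> R) (lev : bits n -> nat).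
Variables (p0 eps delta gamma0 : R) (k0 : nat).
Hypothesis Hlam : (0 < lam)%N.
Hypothesis HSel : forall P, is_distr (Sel P).
Hypothesis Hp0 : 0 < p0 <= 1.
Hypothesis Heps : 0 < eps <= 1.
Hypothesis Hdelta : 0 < delta.
Hypothesis Hg0 : 0 < gamma0 < 1.
Hypothesis HC4 : forall gamma, 0 < gamma < gamma0 ->
  forall k : nat, INR k - 1 < gamma * INR lam <= INR k ->
  forall P : pop n lam, avoids lev m P ->
    beta_k Sel lev k P >= gamma * sqrt ((1 + delta) / (p0 * eps * gamma0)).
Hypothesis Hk0 : INR k0 - 1 < gamma0 * INR lam <= INR k0.
Implicit Types P : pop n lam.

Definition sel_scale := sqrt ((1 + delta) / (p0 * eps * gamma0)).

Lemma sel_scale_sq : sel_scale * sel_scale = (1 + delta) / (p0 * eps * gamma0).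
Proof.
by rewrite sqrt_sqrt //; apply/Rlt_le/Rdiv_lt_0_compat; [| repeat apply: Rmult_lt_0_compat]; lra.
Qed.

Lemma sel_scale_gt0 : 0 < sel_scale.
Proof.
by apply: sqrt_lt_R0; apply: Rdiv_lt_0_compat; [| repeat apply: Rmult_lt_0_compat]; lra.
Qed.

Lemma k0_gt0 : (0 < k0)%N.
Proof.
have hl := INR_ge1 Hlam; have : 0 < gamma0 * INR lam by apply: Rmult_lt_0_compat; lra.
by move=> h; apply: (@lt_INR_ltn 0); rewrite /=; lra.
Qed.

Lemma k0_le_lam : (k0 <= lam)%N.
Proof.
by rewrite -ltnS; apply: lt_INR_ltn; rewrite S_INR; have := INR_ge1 Hlam; nra.
Qed.

Lemma k0_leq_iff (X : nat) : (k0 <= X)%N <-> gamma0 * INR lam <= INR X.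
Proof.
split=> [/le_INR_leq | h]; first lra.
by case: (ltnP X k0) => // /le_INR_leq; rewrite S_INR; lra.
Qed.

Lemma lt_k0_lt (X : nat) : (X < k0)%N -> INR X < gamma0 * INR lam.
Proof. by move=> h; apply: Rnot_le_lt => /k0_leq_iff; rewrite leqNgt h. Qed.

Lemma beta_k_le1 k P : beta_k Sel lev k P <= 1.
Proof. by rewrite -(proj2 (HSel P)); apply: ler_sumR_predT => i; case: (HSel P). Qed.

(* (C4') only holds for [gamma < gamma0]; at [gamma0] itself we pass to the limit
   by choosing [gamma] close enough to [gamma0] that [ceil (gamma lam) = k0]. *)
Lemma beta_k0_ge P : avoids lev m P -> gamma0 * sel_scale <= beta_k Sel lev k0 P.
Proof.
move=> hP; set b := beta_k Sel lev k0 P.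
apply: Rnot_lt_le => hb; have hK := sel_scale_gt0; have hl := INR_ge1 Hlam.
set M := Rmax (Rmax ((INR k0 - 1) / INR lam) (b / sel_scale)) 0.
have hM1 : (INR k0 - 1) / INR lam < gamma0.
  by apply/(Rmult_lt_reg_r (INR lam)); [lra | rewrite /Rdiv Rmult_assoc Rinv_l; lra].
have hM2 : b / sel_scale < gamma0.
  by apply/(Rmult_lt_reg_r sel_scale) => //; rewrite /Rdiv Rmult_assoc Rinv_l; lra.
have hM : M < gamma0 by apply: Rmax_lub_lt; [apply: Rmax_lub_lt | lra].
have hM0 : 0 <= M by apply: Rmax_r.
have hMk : (INR k0 - 1) / INR lam <= M by apply: Rle_trans (Rmax_l _ _); apply: Rmax_l.
have hMb : b / sel_scale <= M by apply: Rle_trans (Rmax_l _ _); apply: Rmax_r.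
set g := (gamma0 + M) / 2.
have hg : 0 < g < gamma0 by rewrite /g; lra.
have hgk : INR k0 - 1 < g * INR lam <= INR k0.
  have : g * INR lam <= gamma0 * INR lam by apply: Rmult_le_compat_r; lra.
  split; last lra.
  apply/(Rmult_lt_reg_r (/ INR lam)); first by apply: Rinv_0_lt_compat; lra.
  by rewrite Rmult_assoc Rinv_r; rewrite /g; lra.
have := HC4 hg hgk hP; rewrite -/sel_scale -/b => /Rge_le hgb.
have : b < g * sel_scale.
  apply/(Rmult_lt_reg_r (/ sel_scale)); first exact: Rinv_0_lt_compat.
  by rewrite Rmult_assoc Rinv_r; rewrite /g; lra.
lra.
Qed.

Lemma beta_k_ge P k : avoids lev m P -> (1 <= k)%N -> INR k < gamma0 * INR lam ->
  INR k / INR lam * sel_scale <= beta_k Sel lev k P.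
Proof.
move=> hP hk hkg; have hl := INR_ge1 Hlam.
have hg : 0 < INR k / INR lam < gamma0.
  split; first by apply: Rdiv_lt_0_compat; [have := le_INR_leq hk; rewrite /=|]; lra.
  by apply/(Rmult_lt_reg_r (INR lam)); [lra | rewrite /Rdiv Rmult_assoc Rinv_l; lra].
have hk2 : INR k - 1 < INR k / INR lam * INR lam <= INR k.
  by rewrite /Rdiv Rmult_assoc Rinv_l; lra.
exact: Rge_le (HC4 hg hk2 hP).
Qed.

(* Since selection probabilities sum to 1, (C4') forces [gamma0 sel_scale <= 1]. *)
Lemma gamma0_delta_le P : avoids lev m P -> gamma0 * (1 + delta) <= p0 * eps.
Proof.
move=> hP; have hb := Rle_trans _ _ _ (beta_k0_ge hP) (beta_k_le1 k0 P).
have hK := sel_scale_gt0; have hpe : 0 < p0 * eps by apply: Rmult_lt_0_compat; lra.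
have h0 : 0 <= gamma0 * sel_scale by apply: Rmult_le_pos; lra.
have h2 : (gamma0 * sel_scale) * (gamma0 * sel_scale) <= 1 by nra.
have e : (gamma0 * sel_scale) * (gamma0 * sel_scale) = gamma0 * (1 + delta) / (p0 * eps).
  have -> : (gamma0 * sel_scale) * (gamma0 * sel_scale) =
            gamma0 * gamma0 * (sel_scale * sel_scale) by ring.
  by rewrite sel_scale_sq; field; repeat split; lra.
rewrite e in h2; apply: (Rmult_le_reg_r (/ (p0 * eps))); first exact: Rinv_0_lt_compat.
by rewrite Rinv_r; lra.
Qed.

End Selection.

(** * Drift of the potential *)

Section Drift.
Variables (n lam m : nat).
Variable Sel : pop n lam -> 'I_lam -> R.
Variable Cross : bits n -> bits n -> bits n -> R.
Variable Mut : bits n -> bits n -> R.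
Variable lev : bits n -> nat.
Variable s : nat -> R.
Variables (p0 eps delta gamma0 : R) (k0 RR : nat).
Hypothesis Hlam : (0 < lam)%N.
Hypothesis HSel : forall P, is_distr (Sel P).
Hypothesis HCross : forall u v, is_distr (Cross u v).
Hypothesis HMut : forall x, is_distr (Mut x).
Hypothesis Hlev : forall x, (1 <= lev x <= m.+1)%N.
Hypothesis Hs : forall j, (1 <= j <= m)%N -> 0 < s j <= 1.
Hypothesis Hp0 : 0 < p0 <= 1.
Hypothesis Heps : 0 < eps <= 1.
Hypothesis Hdelta : 0 < delta.
Hypothesis Hg0 : 0 < gamma0 < 1.
Hypothesis HC1 : forall j, (1 <= j <= m)%N -> forall x, (j <= lev x)%N ->
  \big[Rplus/0]_(y : bits n | (j.+1 <= lev y)%N) Mut x y >= s j.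
Hypothesis HC2 : forall x, Mut x x >= p0.
Hypothesis HC3 : forall j, (1 <= j <= m - 1)%N -> forall u v,
  (j <= lev u)%N -> (j.+1 <= lev v)%N ->
  \big[Rplus/0]_(x : bits n | (j.+1 <= lev x)%N) Cross u v x >= eps.
Hypothesis HC4 : forall gamma, 0 < gamma < gamma0 ->
  forall k : nat, INR k - 1 < gamma * INR lam <= INR k ->
  forall P : pop n lam, avoids lev m P ->
    beta_k Sel lev k P >= gamma * sqrt ((1 + delta) / (p0 * eps * gamma0)).
Hypothesis Hk0 : INR k0 - 1 < gamma0 * INR lam <= INR k0.
Hypothesis Hg0p : gamma0 * (1 + delta) <= p0 * eps.
Hypothesis HR : 2 * psi delta * gamma0 * INR lam <= rho delta ^ RR.
Hypothesis Hbudget : potential_max lam m s p0 delta gamma0 RR *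
  exp (- (delta ^ 2 * gamma0 / (2 * (1 + delta))) * INR lam) <= 1.
Implicit Types P Q : pop n lam.

Local Notation off := (offspring Sel Cross Mut).
Local Notation ker := (kernel Sel Cross Mut).
Local Notation count_ge := (count_ge lev).
Local Notation cur_level := (cur_level m lev k0).
Local Notation count_above := (count_above m lev k0).
Local Notation K := (sel_scale p0 eps delta gamma0).

Let k0_pos : (0 < k0)%N. Proof. exact: k0_gt0 Hlam Hg0 Hk0. Qed.
Let k0_le : (k0 <= lam)%N. Proof. exact: k0_le_lam Hlam Hg0 Hk0. Qed.

Local Notation psi := (psi delta).
Local Notation rho := (rho delta).
Local Notation kappa := (kappa delta).
Local Notation growth_weight := (growth_weight delta).
Local Notation growth_term := (growth_term delta RR).
Local Notation growth_max := (growth_max delta RR).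
Local Notation wait_weight := (wait_weight lam s p0 delta gamma0).
Local Notation pi_up := (pi_up lam s p0 delta gamma0).
Local Notation z_up := (z_up s p0 delta gamma0).
Local Notation u_psi := (u_psi delta).
Local Notation level_tail := (level_tail lam m s p0 delta gamma0 RR).
Local Notation potential_max := (potential_max lam m s p0 delta gamma0 RR).

Let Hg0p' : gamma0 * (1 + delta) <= p0. Proof. by nra. Qed.
Let lamR : 1 <= INR lam. Proof. exact: INR_ge1 Hlam. Qed.
Let K_gt0 : 0 < K. Proof. exact: sel_scale_gt0. Qed.
Let K_sq : K * K = (1 + delta) / (p0 * eps * gamma0). Proof. exact: sel_scale_sq. Qed.
Let beta_k0 P : avoids lev m P -> gamma0 * K <= beta_k Sel lev k0 P.
Proof. exact: beta_k0_ge. Qed.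

Definition prob_H j P := \big[Rplus/0]_(y | (j <= lev y)%N) off P y.

Lemma prob_H_bounds j P : 0 <= prob_H j P <= 1.
Proof.
split; first by apply: sumR_ge0 => y _; apply: offspring_ge0.
exact: offspring_sum_pred_le1.
Qed.

Lemma cur_level_bounds P : avoids lev m P -> (1 <= cur_level P <= m)%N.
Proof.
move=> hP; rewrite cur_level_le andbT.
by have := cur_level_ge1 Hlev k0_le P (avoids_m_gt0 Hlev Hlam hP).
Qed.

Lemma count_above_ltR P : avoids lev m P -> INR (count_above P) < gamma0 * INR lam.
Proof. by move=> hP; apply: (lt_k0_lt Hk0); apply: (count_above_lt k0_pos hP). Qed.

Lemma cross_H_ge l u v : (1 <= l <= m)%N -> (l <= lev u)%N -> (l <= lev v)%N ->
  eps <= \big[Rplus/0]_(x | (l <= lev x)%N) Cross u v x.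
Proof.
case: l => [//|[|l]] hlm hu hv.
  have -> : \big[Rplus/0]_(x | (1 <= lev x)%N) Cross u v x = 1.
    by rewrite -(proj2 (HCross u v)); apply: eq_bigl => x; case/andP: (Hlev x).
  lra.
by apply: Rge_le; apply: (HC3 (j := l.+1)) => //; [lia | exact: leq_trans hu].
Qed.

Lemma mut_stay_ge l x : (l <= lev x)%N -> p0 <= \big[Rplus/0]_(y | (l <= lev y)%N) Mut x y.
Proof.
move=> hx; apply: Rle_trans (sumR_ge_term hx (fun y _ => Mut_ge0 HMut x y)).
exact: Rge_le (HC2 x).
Qed.

Lemma prob_H_ge_sel P j (S S' : pred 'I_lam) (T : pred (bits n)) (b b' e mu : R) :
  0 <= b -> 0 <= b' -> 0 <= e -> 0 <= mu ->
  b <= \big[Rplus/0]_(i | S i) Sel P i -> b' <= \big[Rplus/0]_(i | S' i) Sel P i ->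
  (forall i i', S i -> S' i' -> e <= \big[Rplus/0]_(x | T x) Cross (P i) (P i') x) ->
  (forall x, T x -> mu <= \big[Rplus/0]_(y | (j <= lev y)%N) Mut x y) ->
  b * b' * e * mu <= prob_H j P.
Proof.
move=> hb hb' he hmu hS hS' hC hM.
apply: Rle_trans (offspring_sum_pred_lb HSel HCross HMut hC hM he hmu).
by do 2 apply: Rmult_le_compat_r => //; apply: Rmult_le_compat.
Qed.

Lemma prob_H_upgrade P : avoids lev m P ->
  (1 + delta) * gamma0 * s (cur_level P) / p0 <= prob_H (cur_level P).+1 P.
Proof.
move=> hP; have hl := cur_level_bounds hP; set l := cur_level P in hl *.
have hb := beta_k0 hP; have hK := K_gt0.
have [hs _] := Hs hl.
have hg : 0 <= gamma0 * K by apply: Rmult_le_pos; lra.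
have := prob_H_ge_sel (T := [pred x | (l <= lev x)%N]) hg hg (Rlt_le _ _ (proj1 Heps))
  (Rlt_le _ _ hs) hb hb _ _.
have -> : gamma0 * K * (gamma0 * K) * eps * s l = (1 + delta) * gamma0 * s l / p0.
  have -> : gamma0 * K * (gamma0 * K) * eps * s l = gamma0 * gamma0 * (K * K) * eps * s l by ring.
  by rewrite K_sq; field; lra.
apply.
- by move=> i i' hi hi'; apply: cross_H_ge; rewrite //= (rank_level_cur Hlev k0_pos k0_le).
- by move=> x hx; apply: Rge_le; apply: HC1.
Qed.

Lemma prob_H_growth P : avoids lev m P -> (0 < count_above P)%N ->
  (1 + delta) * INR (count_above P) / INR lam <= prob_H (cur_level P).+1 P.
Proof.
move=> hP hY; have hl := cur_level_bounds hP; have hlm := count_above_gt0 hP hY.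
have hYlt := count_above_ltR hP.
set l := cur_level P in hl hlm *; set Y := count_above P in hY hYlt *.
have hb := beta_k0 hP; have hK := K_gt0.
have hbY := beta_k_ge Hlam Hg0 HC4 hP hY hYlt.
have hg : 0 <= gamma0 * K by apply: Rmult_le_pos; lra.
have hg2 : 0 <= INR Y / INR lam * K.
  by apply: Rmult_le_pos; [apply: Rdiv_le_0_compat; [apply: pos_INR | lra] | lra].
have := prob_H_ge_sel (T := [pred x | (l.+1 <= lev x)%N]) hg hg2 (Rlt_le _ _ (proj1 Heps))
  (Rlt_le _ _ (proj1 Hp0)) hb hbY _ _.
have -> : gamma0 * K * (INR Y / INR lam * K) * eps * p0 = (1 + delta) * INR Y / INR lam.
  have -> : gamma0 * K * (INR Y / INR lam * K) * eps * p0 =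
            gamma0 * (K * K) * (INR Y / INR lam) * eps * p0 by ring.
  by rewrite K_sq; field; lra.
apply; last by move=> x hx; apply: mut_stay_ge.
move=> i i' hi hi'; apply: Rge_le; apply: HC3; first lia.
  exact: (rank_level_cur Hlev k0_pos k0_le hi).
by apply: leq_trans hi'; apply: rank_level_ge.
Qed.

Lemma prob_H_stay P : avoids lev m P -> (1 + delta) * gamma0 <= prob_H (cur_level P) P.
Proof.
move=> hP; have hl := cur_level_bounds hP; set l := cur_level P in hl *.
have hb := beta_k0 hP; have hK := K_gt0.
have hg : 0 <= gamma0 * K by apply: Rmult_le_pos; lra.
have := prob_H_ge_sel (T := [pred x | (l <= lev x)%N]) hg hg (Rlt_le _ _ (proj1 Heps))
  (Rlt_le _ _ (proj1 Hp0)) hb hb _ _.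
have -> : gamma0 * K * (gamma0 * K) * eps * p0 = (1 + delta) * gamma0.
  have -> : gamma0 * K * (gamma0 * K) * eps * p0 = gamma0 * gamma0 * (K * K) * eps * p0 by ring.
  by rewrite K_sq; field; lra.
apply; last by move=> x hx; apply: mut_stay_ge.
by move=> i i' hi hi'; apply: cross_H_ge; rewrite //= (rank_level_cur Hlev k0_pos k0_le).
Qed.

Lemma expected_exp_count P j (k : R) :
  \big[Rplus/0]_Q (ker P Q * exp (- k * INR (count_ge j Q))) =
  (1 - (1 - exp (- k)) * prob_H j P) ^ lam.
Proof. exact: (kernel_exp_count HSel HCross HMut P (fun y => (j <= lev y)%N)). Qed.

Definition fall_prob P :=
  \big[Rplus/0]_Q (ker P Q * (if (count_ge (cur_level P) Q < k0)%N then 1 else 0)).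

(* Exponential Markov inequality: fewer than [k0 >= gamma0 lam] individuals in [H_l]. *)
Lemma fall_prob_le_exp_moment P (k : R) : 0 <= k ->
  fall_prob P <= exp (k * gamma0 * INR lam) *
    \big[Rplus/0]_Q (ker P Q * exp (- k * INR (count_ge (cur_level P) Q))).
Proof.
move=> hk; rewrite /fall_prob big_distrr /=; apply: ler_sumR => Q _.
have hker := kernel_ge0 HSel HCross HMut P Q.
have he := exp_pos (k * gamma0 * INR lam).
have he' := exp_pos (- k * INR (count_ge (cur_level P) Q)).
case: ifP => hc; last by rewrite Rmult_0_r; apply: Rmult_le_pos; nra.
have hr := lt_k0_lt Hk0 hc.
have : 1 <= exp (k * gamma0 * INR lam) * exp (- k * INR (count_ge (cur_level P) Q)).
  by rewrite -exp_plus -exp_0; apply: exp_le_compat; nra.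
nra.
Qed.

Lemma fall_prob_le P : avoids lev m P ->
  fall_prob P <= exp (- (delta ^ 2 * gamma0 / (2 * (1 + delta))) * INR lam).
Proof.
move=> hP; set k := ln (1 + delta); have hk := ln_1p_ge0 (Rlt_le _ _ Hdelta).
have hp := prob_H_stay hP; have [hp0 hp1] := prob_H_bounds (cur_level P) P.
have hdg : delta * gamma0 <= 1 by nra.
apply: Rle_trans (fall_prob_le_exp_moment P hk) _.
rewrite expected_exp_count /k exp_Ropp exp_ln; last lra.
have -> : 1 - / (1 + delta) = delta / (1 + delta) by field; lra.
have hu := div_1p_bounds (Rlt_le _ _ Hdelta).
have hp' : 0 <= (1 + delta) * gamma0 <= prob_H (cur_level P) P by split; [nra | exact: hp].
have := pow_1m_mul_le lam hu hp' hp1.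
have -> : delta / (1 + delta) * ((1 + delta) * gamma0) = delta * gamma0 by field; lra.
move/Rle_trans/(_ (pow_1m_le_exp lam hdg)) => hpow.
apply: Rle_trans (Rmult_le_compat_l _ _ _ (Rlt_le _ _ (exp_pos _)) hpow) _.
rewrite -exp_plus; apply: exp_le_compat.
have := ln_1p_le_sub (Rlt_le _ _ Hdelta); rewrite -/k => hkd.
have : (k - delta) * gamma0 <= - (delta ^ 2 / (2 * (1 + delta))) * gamma0.
  by apply: Rmult_le_compat_r; lra.
have -> : - (delta ^ 2 * gamma0 / (2 * (1 + delta))) = - (delta ^ 2 / (2 * (1 + delta))) * gamma0.
  by field; lra.
move=> h; have := Rmult_le_compat_r (INR lam) _ _ (pos_INR lam) h; lra.
Qed.

Let W_ge0 := wait_weight_ge0 Hlam Hs Hp0 Hdelta Hg0 Hg0p'.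
Let tail_ge0 := level_tail_ge0 RR Hlam Hs Hp0 Hdelta Hg0 Hg0p'.
Let tail_anti := level_tail_anti RR Hlam Hs Hp0 Hdelta Hg0 Hg0p'.
Let pmax_ge0 := potential_max_ge0 RR Hlam Hs Hp0 Hdelta Hg0 Hg0p'.

Definition potential_at l (Y : nat) :=
  level_tail l + wait_weight l * exp (- psi * INR Y) + growth_term Y.
Definition potential P := potential_at (cur_level P) (count_above P).
Definition potential_avoid Q := if avoids lev m Q then potential Q else 0.

Lemma potential_at_bounds l Y : (1 <= l <= m)%N ->
  level_tail l <= potential_at l Y <= level_tail l.-1.
Proof.
move=> hl; rewrite (level_tail_pred lam s p0 delta gamma0 RR hl) /potential_at.
have hW := W_ge0 hl; have [[hpsi _] _] := psi_bounds Hdelta.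
have he : 0 < exp (- psi * INR Y) <= 1.
  by split; [apply: exp_pos | rewrite -exp_0; apply: exp_le_compat; have := pos_INR Y; nra].
have := growth_term_bounds RR Hdelta Y; split; nra.
Qed.

Lemma potential_le_max P : avoids lev m P -> potential P <= potential_max.
Proof.
move=> hP; have [_ h] := potential_at_bounds (count_above P) (cur_level_bounds hP).
by apply: Rle_trans h _; apply: tail_anti.
Qed.

(* [Q] is scored at the current level of [P]; this overestimates its potential
   unless [Q] fell below that level, which costs at most [potential_max]. *)
Lemma potential_avoid_le P Q : avoids lev m P ->
  potential_avoid Q <= potential_at (cur_level P) (count_ge (cur_level P).+1 Q) +
    potential_max * (if (count_ge (cur_level P) Q < k0)%N then 1 else 0).
Proof.
move=> hP; have hl := cur_level_bounds hP; set l := cur_level P in hl *.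
have [hPs0 _] := potential_at_bounds (count_ge l.+1 Q) hl.
have hG := pmax_ge0; have htail := tail_ge0 l.
rewrite /potential_avoid; case: ifP => hQ; last by case: ifP => _; lra.
case: ifP => hc; first by have := potential_le_max hQ; lra.
have hle : (l <= cur_level Q)%N.
  by apply: cur_level_max; [case/andP: hl | rewrite leqNgt hc].
rewrite Rmult_0_r Rplus_0_r; case: (ltnP l (cur_level Q)) => hlt.
  have [_ h] := potential_at_bounds (count_above Q) (cur_level_bounds hQ).
  apply: Rle_trans h (Rle_trans _ _ _ (tail_anti (_ : l <= (cur_level Q).-1)%N) hPs0).
  lia.
rewrite /potential /count_above; have -> : cur_level Q = l by apply/eqP; rewrite eqn_leq hlt hle.
exact: Rle_refl.
Qed.

Definition up_moment P (k : R) := (1 - (1 - exp (- k)) * prob_H (cur_level P).+1 P) ^ lam.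

Lemma expected_potential_at P :
  \big[Rplus/0]_Q (ker P Q * (potential_at (cur_level P) (count_ge (cur_level P).+1 Q) +
    potential_max * (if (count_ge (cur_level P) Q < k0)%N then 1 else 0))) =
  level_tail (cur_level P) + wait_weight (cur_level P) * up_moment P psi +
  growth_weight * \big[Rplus/0]_(r < RR.+1) up_moment P (kappa r) + potential_max * fall_prob P.
Proof.
set l := cur_level P.
rewrite (eq_bigr (fun Q => level_tail l * ker P Q +
   wait_weight l * (ker P Q * exp (- psi * INR (count_ge l.+1 Q))) +
   growth_weight * \big[Rplus/0]_(r < RR.+1) (ker P Q * exp (- kappa r * INR (count_ge l.+1 Q))) +
   potential_max * (ker P Q * (if (count_ge l Q < k0)%N then 1 else 0)))); last first.
  by move=> Q _; rewrite /potential_at /growth_term -big_distrr /=; ring.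
rewrite !big_split /= -!big_distrr /= (kernel_sum1 HSel HCross HMut) Rmult_1_r.
rewrite expected_exp_count exchange_big /=.
by under eq_bigr => r _ do rewrite expected_exp_count.
Qed.

Lemma up_moment_le1 P (k : R) : 0 <= k -> up_moment P k <= 1.
Proof.
move=> hk; have [hp0 hp1] := prob_H_bounds (cur_level P).+1 P.
have : exp (- k) <= 1 by rewrite -exp_0; apply: exp_le_compat; lra.
have := exp_pos (- k); move=> h0 h1; apply: pow_le_one; split; nra.
Qed.

Lemma up_moment_le_pi P : avoids lev m P -> up_moment P psi <= 1 - pi_up (cur_level P).
Proof.
move=> hP; have hl := cur_level_bounds hP; have hp := prob_H_upgrade hP.
have hz := z_up_bounds Hs Hp0 Hdelta Hg0 Hg0p' hl; have [_ hp1] := prob_H_bounds (cur_level P).+1 P.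
have hu := u_psi_bounds Hdelta; have hu0 := u_psi_gt0 Hdelta.
have -> : 1 - pi_up (cur_level P) = (1 - u_psi * z_up (cur_level P)) ^ lam.
  by rewrite /pi_up Rmult_comm; ring.
by apply: pow_1m_mul_le; [rewrite /u_psi in hu hu0; lra | split; [lra | exact: hp] | lra].
Qed.

Lemma up_moment_le_exp P (k : R) : avoids lev m P -> (0 < count_above P)%N -> 0 <= k <= psi ->
  up_moment P k <= exp (- (rho * k) * INR (count_above P)).
Proof.
move=> hP hY hk; have hp := prob_H_growth hP hY; have [hp0 hp1] := prob_H_bounds (cur_level P).+1 P.
set p := prob_H _ P in hp hp0 hp1 *; set Y := INR (count_above P) in hp *.
have hY0 : 0 <= Y by apply: pos_INR.
have hu : 0 <= 1 - exp (- k) <= 1.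
  have : exp (- k) <= 1 by rewrite -exp_0; apply: exp_le_compat; lra.
  by have := exp_pos (- k); lra.
apply: Rle_trans (pow_1m_le_exp lam (_ : (1 - exp (- k)) * p <= 1)) _; first nra.
apply: exp_le_compat.
have h1 : (1 + delta) * Y <= p * INR lam.
  apply: (Rmult_le_reg_r (/ INR lam)); first by apply: Rinv_0_lt_compat; lra.
  by have -> : p * INR lam * / INR lam = p by field; lra.
have h2 := rho_mul_le Hdelta hk.
have : rho * k * Y <= (1 - exp (- k)) * (1 + delta) * Y by apply: Rmult_le_compat_r.
have : (1 - exp (- k)) * ((1 + delta) * Y) <= (1 - exp (- k)) * (p * INR lam).
  by apply: Rmult_le_compat_l; lra.
nra.
Qed.

Lemma drift_none_above P : avoids lev m P -> count_above P = 0%N ->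
  level_tail (cur_level P) + wait_weight (cur_level P) * up_moment P psi +
  growth_weight * \big[Rplus/0]_(r < RR.+1) up_moment P (kappa r) <= potential P - 2.
Proof.
move=> hP hY; have hl := cur_level_bounds hP.
have hWE : wait_weight (cur_level P) * up_moment P psi <= wait_weight (cur_level P) - 2.
  have := wait_weight_pi_up Hlam Hs Hp0 Hdelta Hg0 Hg0p' hl.
  have := Rmult_le_compat_l _ _ _ (W_ge0 hl) (up_moment_le_pi hP); lra.
have hS : growth_weight * \big[Rplus/0]_(r < RR.+1) up_moment P (kappa r) <= growth_max.
  apply: Rmult_le_compat_l; first by have := growth_weight_gt0 Hdelta; lra.
  by rewrite -sumR_ord1; apply: ler_sumR => r _; apply: up_moment_le1; apply: kappa_ge0.
rewrite /potential /potential_at hY growth_term0 (_ : - psi * INR 0 = 0) ?exp_0 ?Rmult_1_r;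
  last by rewrite /=; ring.
have := Rplus_le_compat _ _ _ _ hWE hS; lra.
Qed.

Lemma drift_some_above P : avoids lev m P -> (0 < count_above P)%N ->
  level_tail (cur_level P) + wait_weight (cur_level P) * up_moment P psi +
  growth_weight * \big[Rplus/0]_(r < RR.+1) up_moment P (kappa r) <= potential P - 2.
Proof.
move=> hP hY; have hl := cur_level_bounds hP; have [[hpsi _] _] := psi_bounds Hdelta.
have hE : wait_weight (cur_level P) * up_moment P psi <=
          wait_weight (cur_level P) * exp (- psi * INR (count_above P)).
  apply: Rmult_le_compat_l; first exact: W_ge0.
  apply: Rle_trans (up_moment_le_exp hP hY _) _; first lra.
  apply: exp_le_compat; have := rho_ge1 Hdelta.
  have : 0 <= psi * INR (count_above P) by apply: Rmult_le_pos; [lra | apply: pos_INR].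
  nra.
have hS : growth_weight * \big[Rplus/0]_(r < RR.+1) up_moment P (kappa r) <=
    growth_weight * \big[Rplus/0]_(r < RR.+1) exp (- (rho * kappa r) * INR (count_above P)).
  apply: Rmult_le_compat_l; first by have := growth_weight_gt0 Hdelta; lra.
  apply: ler_sumR => r _; apply: up_moment_le_exp => //.
  by split; [apply: kappa_ge0 | apply: kappa_le_psi].
have := growth_term_gain Hdelta HR hY (count_above_ltR hP).
rewrite /potential /potential_at; lra.
Qed.

Lemma potential_drift P : avoids lev m P ->
  \big[Rplus/0]_Q (ker P Q * potential_avoid Q) <= potential P - 1.
Proof.
move=> hP; apply: Rle_trans (ler_sumR _ (fun Q _ => Rmult_le_compat_l _ _ _
  (kernel_ge0 HSel HCross HMut P Q) (potential_avoid_le Q hP))) _.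
rewrite expected_potential_at.
have hfall : potential_max * fall_prob P <= 1.
  by apply: Rle_trans Hbudget; apply: Rmult_le_compat_l => //; apply: fall_prob_le.
case: (posnP (count_above P)) => hY.
  by have := drift_none_above hP hY; lra.
by have := drift_some_above hP hY; lra.
Qed.

Variable init : pop n lam -> R.
Hypothesis Hinit : is_distr init.

Local Notation q := (q Sel Cross Mut init lev m).
Local Notation surv := (surv Sel Cross Mut init lev m).

Lemma q_not_avoids t Q : ~~ avoids lev m Q -> q t Q = 0.
Proof. by case: t => [|t] /= /negbTE ->. Qed.

Lemma q_ge0 t Q : 0 <= q t Q.
Proof.
elim: t Q => [|t IH] Q /=; case: ifP => _; try lra; first by case: Hinit.
by apply: sumR_ge0 => P _; apply: Rmult_le_pos => //; apply: kernel_ge0.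
Qed.

Definition expected_potential t := \big[Rplus/0]_Q (q t Q * potential Q).

Lemma expected_potential_ge0 t : 0 <= expected_potential t.
Proof.
apply: sumR_ge0 => Q _; case hQ: (avoids lev m Q); last by rewrite q_not_avoids ?hQ //; lra.
apply: Rmult_le_pos; first exact: q_ge0.
by case: (potential_at_bounds (count_above Q) (cur_level_bounds hQ)) => h _; apply: Rle_trans h.
Qed.

(* The drift condition, summed against the law of the surviving populations. *)
Lemma expected_potential_step t : expected_potential t.+1 <= expected_potential t - surv t.
Proof.
have -> : expected_potential t.+1 =
    \big[Rplus/0]_Q \big[Rplus/0]_P (q t P * (ker P Q * potential_avoid Q)).
  apply: eq_bigr => Q _ /=; rewrite /potential_avoid; case: ifP => hQ.
    by rewrite big_distrl /=; apply: eq_bigr => P _; ring.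
  by rewrite Rmult_0_l big1 // => P _; ring.
rewrite exchange_big /= /expected_potential /surv -sumRB; apply: ler_sumR => P _.
rewrite -big_distrr /=.
case hP: (avoids lev m P); last by rewrite q_not_avoids ?hP //; lra.
have h := Rmult_le_compat_l _ _ _ (q_ge0 t P) (potential_drift hP).
by apply: Rle_trans h _; lra.
Qed.

Lemma expected_potential0_le : expected_potential 0 <= potential_max.
Proof.
case: Hinit => h0 h1; rewrite /expected_potential /=.
apply: Rle_trans (_ : _ <= \big[Rplus/0]_Q (init Q * potential_max)) _.
  apply: ler_sumR => Q _; case: ifP => hQ; last by have := h0 Q; have := pmax_ge0; nra.
  by apply: Rmult_le_compat_l => //; apply: potential_le_max.
by rewrite -big_distrl /= h1; lra.
Qed.

Lemma sum_surv_le N : \big[Rplus/0]_(0 <= t < N) surv t <= potential_max.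
Proof.
suff : \big[Rplus/0]_(0 <= t < N) surv t <= expected_potential 0 - expected_potential N.
  by have := expected_potential_ge0 N; have := expected_potential0_le; lra.
elim: N => [|N IH]; first by rewrite big_geq //; lra.
by rewrite big_nat_recr //=; have := expected_potential_step N; lra.
Qed.

Lemma ET_partial_le N : ET_partial Sel Cross Mut init lev m N <= INR lam * potential_max.
Proof. by apply: Rmult_le_compat_l; [apply: pos_INR | apply: sum_surv_le]. Qed.

End Drift.

Lemma ceil_exists (x : R) : 0 < x -> exists k : nat, INR k - 1 < x <= INR k.
Proof.
move=> hx; have [N [hN1 hN2]] := archimed_cor1 (/ x) (Rinv_0_lt_compat _ hx).
have hN : x <= INR N.
  rewrite -(Rinv_inv x) -(Rinv_inv (INR N)); apply/Rlt_le/Rinv_lt_contravar => //.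
  by apply: Rmult_lt_0_compat; apply: Rinv_0_lt_compat => //; apply: lt_0_INR.
elim: N hN {hN1 hN2} => [|N IH] hN; first by rewrite /= in hN; lra.
case: (Rle_lt_dec x (INR N)) => h; first exact: IH.
by exists N.+1; rewrite S_INR in hN *; lra.
Qed.

(* The number [RR + 1] of rates in [growth_term] must be logarithmic in [lam]. *)
Lemma rho_pow_exists (delta gamma0 : R) (lam : nat) : 0 < delta -> 0 < gamma0 -> (0 < lam)%N ->
  exists RR : nat, 2 * psi delta * gamma0 * INR lam <= rho delta ^ RR /\
    INR RR <= 1 + 2 / psi delta * Rmax 0 (ln (2 * psi delta * gamma0 * INR lam)).
Proof.
move=> hd hg hl; have [[hp1 hp2] _] := psi_bounds hd; have hl1 := INR_ge1 hl.
set x := 2 * psi delta * gamma0 * INR lam.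
have hx : 0 < x by repeat apply: Rmult_lt_0_compat; lra.
have h2p : 0 <= 2 / psi delta by apply: Rdiv_le_0_compat; lra.
have hmax : 0 <= Rmax 0 (ln x) by apply: Rmax_l.
case: (Rle_lt_dec x 1) => hx1.
  by exists 0%N; split; [rewrite /=; lra | have := Rmult_le_pos _ _ h2p hmax; rewrite /=; lra].
have hlr := ln_rho_ge hd.
have hlr0 : 0 < ln (rho delta) by lra.
have hlnx : 0 < ln x by rewrite -ln_1; apply: ln_increasing; lra.
have [k [hk1 hk2]] := ceil_exists (Rdiv_lt_0_compat _ _ hlnx hlr0).
exists k; split.
  have -> : rho delta ^ k = exp (ln (rho delta) * INR k).
    by rewrite exp_mul_INR exp_ln //; exact: rho_gt0.
  rewrite -[X in X <= _](exp_ln x) //.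
  apply: exp_le_compat; have := Rmult_le_compat_l _ _ _ (Rlt_le _ _ hlr0) hk2.
  by have -> : ln (rho delta) * (ln x / ln (rho delta)) = ln x by field; lra.
rewrite Rmax_right; last lra.
suff : ln x / ln (rho delta) <= 2 / psi delta * ln x by lra.
have -> : 2 / psi delta * ln x = ln x * / (psi delta / 2) by field; lra.
by apply: Rmult_le_compat_l; [lra | apply: Rinv_le_contravar; lra].
Qed.

Lemma ET_partial_avoids_none (n lam m : nat) (Sel : pop n lam -> 'I_lam -> R)
    (Cross : bits n -> bits n -> bits n -> R) (Mut : bits n -> bits n -> R)
    (init : pop n lam -> R) (lev : bits n -> nat) (N : nat) :
  (forall P : pop n lam, ~~ avoids lev m P) -> ET_partial Sel Cross Mut init lev m N = 0.
Proof.
move=> hnone; rewrite /ET_partial big1 ?Rmult_0_r // => t _.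
by rewrite /surv big1 // => Q _; apply: q_not_avoids.
Qed.

Lemma ET_bound_ge0 (lam m : nat) (s : nat -> R) (p0 delta gamma0 : R) :
  (forall j, (1 <= j <= m)%N -> 0 < s j <= 1) -> 0 < p0 -> 0 < delta -> 0 < gamma0 ->
  0 <= 48 / psi delta ^ 5 * (INR m * INR lam * (1 + ln (1 + psi delta ^ 4 / 24 * INR lam)) +
    p0 / ((1 + delta) * gamma0) * \big[Rplus/0]_(1 <= j < m.+1) (/ s j)).
Proof.
move=> Hs Hp0 Hdelta Hg0; have [[hpsi _] _] := psi_bounds Hdelta.
have hc : 0 <= psi delta ^ 4 / 24 * INR lam.
  by apply: Rmult_le_pos; [apply: Rdiv_le_0_compat; [apply: pow_le |] | apply: pos_INR]; lra.
apply: Rmult_le_pos; first by apply: Rdiv_le_0_compat; [| apply: pow_lt]; lra.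
apply: Rplus_le_le_0_compat.
  apply: Rmult_le_pos; first by apply: Rmult_le_pos; apply: pos_INR.
  by have := ln_1p_ge0 hc; lra.
apply: Rmult_le_pos; first by apply: Rdiv_le_0_compat; [| apply: Rmult_lt_0_compat]; lra.
rewrite big_nat_cond; apply: sumR_ge0 => j /andP[hj _].
by have [h _] := Hs j (ltac:(lia) : (1 <= j <= m)%N); apply/Rlt_le/Rinv_0_lt_compat.
Qed.

Unset Implicit Arguments.

Theorem corollary1
  (n lam m : nat)
  (Sel : pop n lam -> 'I_lam -> R)
  (Cross : bits n -> bits n -> bits n -> R)
  (Mut : bits n -> bits n -> R)
  (init : pop n lam -> R)
  (lev : bits n -> nat)
  (s : nat -> R) (s_star p0 eps delta gamma0 : R) :
  (0 < lam)%N ->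
  (forall P, is_distr (Sel P)) ->
  (forall u v, is_distr (Cross u v)) ->
  (forall x, is_distr (Mut x)) ->
  is_distr init ->
  (forall x, (1 <= lev x <= m.+1)%N) ->
  (forall j, (1 <= j <= m)%N -> 0 < s j <= 1) ->
  0 < s_star <= 1 -> 0 < p0 <= 1 -> 0 < eps <= 1 -> 0 < delta ->
  0 < gamma0 < 1 ->
  (forall j, (1 <= j <= m)%N ->
     (forall x, (j <= lev x)%N ->
        \big[Rplus/0]_(y : bits n | (j.+1 <= lev y)%N) Mut x y >= s j)
     /\ s j >= s_star) ->
  (forall x, Mut x x >= p0) ->
  (forall j, (1 <= j <= m - 1)%N -> forall u v,
     (j <= lev u)%N -> (j.+1 <= lev v)%N ->
     \big[Rplus/0]_(x : bits n | (j.+1 <= lev x)%N) Cross u v x >= eps) ->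
  (forall gamma, 0 < gamma < gamma0 ->
     forall k : nat, INR k - 1 < gamma * INR lam <= INR k ->
     forall P : pop n lam, avoids lev m P ->
       beta_k Sel lev k P >= gamma * sqrt ((1 + delta) / (p0 * eps * gamma0))) ->
  (let a := delta ^ 2 * gamma0 / (2 * (1 + delta)) in
   let psi := Rmin (delta / 2) (1 / 2) in
   let c := psi ^ 4 / 24 in
   INR lam >= 2 / a * ln (32 * INR m * p0 / ((delta * gamma0) ^ 2 * c * s_star * psi))) ->
  let psi := Rmin (delta / 2) (1 / 2) in
  let c := psi ^ 4 / 24 in
  forall N : nat,
    ET_partial Sel Cross Mut init lev m N <=
    2 / (c * psi) *
      (INR m * INR lam * (1 + ln (1 + c * INR lam)) +
       p0 / ((1 + delta) * gamma0) * \big[Rplus/0]_(1 <= j < m.+1) (/ s j)).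
Proof.
move=> Hlam HSel HCross HMut Hinit Hlev Hs Hss Hp0 Heps Hdelta Hg0 HC1 HC2 HC3 HC4 HC5 psi' c N.
have [[hpsi _] _] := psi_bounds Hdelta.
rewrite /c (_ : psi' = psi delta) //.
rewrite (_ : 2 / (psi delta ^ 4 / 24 * psi delta) = 48 / psi delta ^ 5);
  last by field; lra.
clear c psi'.
case: (pickP (avoids (lam := lam) lev m)) => [P0 hP0 | hnone]; last first.
  rewrite ET_partial_avoids_none => [|P]; last by rewrite hnone.
  by apply: ET_bound_ge0 => //; lra.
have [k0 Hk0] := ceil_exists (Rmult_lt_0_compat _ _ (proj1 Hg0) (lt_0_INR _ (ltP Hlam))).
have Hg0p := gamma0_delta_le Hlam HSel Hp0 Heps Hdelta Hg0 HC4 Hk0 hP0.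
have Hg0p' : gamma0 * (1 + delta) <= p0 by nra.
have [RR [HR1 HR2]] := rho_pow_exists Hdelta (proj1 Hg0) Hlam.
have Hbudget := potential_max_exp_le1 Hlam Hs Hp0 Hdelta Hg0 Hg0p' HR2
  (fun j hj => Rge_le _ _ (proj2 (HC1 j hj))) Hss HC5.
apply: Rle_trans (lam_potential_max_le Hlam Hs Hp0 Hdelta Hg0 Hg0p' HR2).
exact: ET_partial_le Hlam HSel HCross HMut Hlev Hs Hp0 Heps Hdelta Hg0
  (fun j hj => proj1 (HC1 j hj)) HC2 HC3 HC4 Hk0 Hg0p HR1 Hbudget init Hinit N.
Qed.
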